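(* Let $f:\mathbb{R}^n\to\mathbb{R}$ be a convex function of class $C^2$. (i) Suppose $f\in\mathcal{F}$. Then for every increasing function $G:\mathbb{R}\to\mathbb{R}$ of class $C^1$ with $G(0)=0$, there exists $\phi\in\mathcal{F}$ such that: - for all $x$ with $\nabla f(x)\neq0$, $$\nabla\phi(x)=G(\|\nabla f(x)\|)\,\frac{\nabla f(x)}{\|\nabla f(x)\|}; \qquad (\ast)$$ - for all $x$ with $\nabla f(x)=0$, $\nabla\phi(x)=0$. (ii) Suppose there exist an increasing function $G:\mathbb{R}\to\mathbb{R}$ of class $C^1$ and a convex function $\phi:\mathbb{R}^n\to\mathbb{R}$ of class $C^2$ such that: - $G(0)=0$; - $sG'(s)-G(s)\neq0$ for almost every $s\in\mathbb{R}$; - $(\ast)$ holds at every $x$ with $\nabla f(x)\ne0$. Then $f\in\mathcal{F}$.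
   Context: $\|\cdot\|$ is the Euclidean norm on $\mathbb{R}^n$. $\mathcal{F}$ denotes the set of functions $f:\mathbb{R}^n\to\mathbb{R}$ such that: 1. $f$ is convex and of class $C^2$; 2. for every $x\in\mathbb{R}^n$ there exists $\lambda\in\mathbb{R}$ with $\mathrm{Hess}\,f(x)\,\nabla f(x)=\lambda\,\nabla f(x)$. *)

From Stdlib Require Import Reals.
From mathcomp Require Import ssreflect ssrfun ssrbool eqtype ssrnat seq fintype bigop.

Open Scope R_scope.

Definition vec (n : nat) := 'I_n -> R.

Definition vzero {n} : vec n := fun _ => 0.
Definition vadd {n} (x y : vec n) : vec n := fun i => x i + y i.
Definition vscale {n} (t : R) (x : vec n) : vec n := fun i => t * x i.
Definition vbasis {n} (i : 'I_n) : vec n := fun j => if j == i then 1 else 0.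

Definition vsum {n} (F : 'I_n -> R) : R := \big[Rplus/0]_(i < n) F i.

Definition vnorm {n} (x : vec n) : R := sqrt (vsum (fun i => x i * x i)).

Definition vcontinuous {n} (g : vec n -> R) : Prop :=
  forall x eps, 0 < eps -> exists delta, 0 < delta /\
    forall y, vnorm (vadd y (vscale (-1) x)) < delta -> Rabs (g y - g x) < eps.

Definition has_partial {n} (g : vec n -> R) (i : 'I_n) (x : vec n) (l : R) : Prop :=
  derivable_pt_lim (fun t => g (vadd x (vscale t (vbasis i)))) 0 l.

Definition is_grad {n} (g : vec n -> R) (x v : vec n) : Prop :=
  forall i, has_partial g i x (v i).

Definition is_hess {n} (g : vec n -> R) (x : vec n) (H : 'I_n -> 'I_n -> R) : Prop :=
  exists Dg : vec n -> vec n, (forall y, is_grad g y (Dg y)) /\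
    forall i j, has_partial (fun y => Dg y i) j x (H i j).

Definition C2fun {n} (g : vec n -> R) : Prop :=
  exists (Dg : vec n -> vec n) (D2g : vec n -> 'I_n -> 'I_n -> R),
    (forall x, is_grad g x (Dg x)) /\
    (forall x i j, has_partial (fun y => Dg y i) j x (D2g x i j)) /\
    (forall i, vcontinuous (fun x => Dg x i)) /\
    (forall i j, vcontinuous (fun x => D2g x i j)).

Definition convex {n} (g : vec n -> R) : Prop :=
  forall x y t, 0 <= t <= 1 ->
    g (vadd (vscale t x) (vscale (1 - t) y)) <= t * g x + (1 - t) * g y.

Definition mat_app {n} (H : 'I_n -> 'I_n -> R) (v : vec n) : vec n :=
  fun i => vsum (fun j => H i j * v j).

Definition classF {n} (g : vec n -> R) : Prop :=
  convex g /\ C2fun g /\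
  forall x v H, is_grad g x v -> is_hess g x H ->
    exists lam : R, mat_app H v = vscale lam v.

Definition nondecr (G : R -> R) : Prop := forall s t, s <= t -> G s <= G t.

Definition C1_with (G G' : R -> R) : Prop :=
  (forall s, derivable_pt_lim G s (G' s)) /\ continuity G'.

Definition C1fun (G : R -> R) : Prop := exists G', C1_with G G'.

(* Lebesgue-null subsets of R: coverable by countably many intervals of
   arbitrarily small total length. *)
Definition negligible (A : R -> Prop) : Prop :=
  forall eps, 0 < eps -> exists a b : nat -> R,
    (forall k, a k <= b k) /\
    (forall s, A s -> exists k, a k <= s <= b k) /\
    (forall N, sum_f_R0 (fun k => b k - a k) N <= eps).

Definition almost_everywhere (P : R -> Prop) : Prop :=
  negligible (fun s => ~ P s).

From Stdlib Require Import Reals Lra Classical FunctionalExtensionality.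
From Coquelicot Require Import Coquelicot.
From mathcomp Require Import ssreflect ssrfun ssrbool eqtype ssrnat seq fintype bigop.
From HB Require Import structures.
Open Scope R_scope.

(* (i) Write v = grad f, s = |v| and Hess f v = lam v.  The field F = G(s) v / s has Jacobian
   (G(s)/s) Hess f + (G'(s) - G(s)/s) (lam / s^2) v v^T, which is symmetric, so F is the gradient
   of its line integral phi from the origin.  Splitting w along v, the quadratic form of this
   Jacobian is (G(s)/s) <Hess f w', w'> + G'(s) (lam / s^2) (v.w)^2 >= 0, so phi is convex, and
   v is again an eigenvector of Hess phi.
   (ii) Conversely, the symmetry of Hess phi forces (s G'(s) - G(s)) (v ^ Hess f v) = 0.  If the
   wedge were nonzero at x, it would stay nonzero nearby, so along each coordinate line through x
   the values of |grad f| would lie in the null set where s G'(s) = G(s); by the intermediate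
   value theorem |grad f| is then constant on these lines, and Hess f v = grad |grad f|^2 / 2
   would vanish at x, a contradiction. *)

Lemma Rplus_associative : associative Rplus.
Proof. by move=> a b c; rewrite Rplus_assoc. Qed.
HB.instance Definition _ :=
  Monoid.isComLaw.Build R 0 Rplus Rplus_associative Rplus_comm Rplus_0_l.

Section FiniteSums.
Context {n : nat}.
Implicit Types F G : 'I_n -> R.

Lemma vsum_ext F G : (forall i, F i = G i) -> vsum F = vsum G.
Proof. move=> H; rewrite /vsum; apply: eq_bigr => i _; exact: H. Qed.

Lemma vsum_add F G : vsum (fun i => F i + G i) = vsum F + vsum G.
Proof. rewrite /vsum; exact: big_split. Qed.

Lemma vsum_scal c F : vsum (fun i => c * F i) = c * vsum F.
Proof.
rewrite /vsum; apply: (big_rec2 (fun a b => b = c * a)); first by ring.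
by move=> i y1 y2 _ ->; ring.
Qed.

Lemma vsum_scalr c F : vsum (fun i => F i * c) = vsum F * c.
Proof. by rewrite (vsum_ext _ (fun i => c * F i)) ?vsum_scal => *; ring. Qed.

Lemma vsum_zero : vsum (fun _ : 'I_n => 0) = 0.
Proof. rewrite /vsum; exact: big1. Qed.

Lemma vsum_sub F G : vsum (fun i => F i - G i) = vsum F - vsum G.
Proof.
rewrite (vsum_ext _ (fun i => F i + (-1) * G i)) ?vsum_add ?vsum_scal => *; ring.
Qed.

Lemma vsum_const c : vsum (fun _ : 'I_n => c) = INR n * c.
Proof.
rewrite /vsum big_const card_ord.
elim: n => [|m IH]; first by rewrite /=; ring.
by rewrite [iter _ _ _]/= IH S_INR; ring.
Qed.

Lemma vsum_delta i F : vsum (fun j => vbasis i j * F j) = F i.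
Proof.
rewrite /vsum (bigD1 i) //= /vbasis eqxx big1 ?Rmult_1_l ?Rplus_0_r //.
by move=> j /negbTE ->; ring.
Qed.

Lemma vsum_swap (F : 'I_n -> 'I_n -> R) :
  vsum (fun i => vsum (fun j => F i j)) = vsum (fun j => vsum (fun i => F i j)).
Proof. rewrite /vsum; exact: exchange_big. Qed.

Lemma vsum_le F G : (forall i, F i <= G i) -> vsum F <= vsum G.
Proof.
move=> H; rewrite /vsum; apply: (big_ind2 (fun a b => a <= b)); first lra.
- by move=> *; lra.
- by move=> i _; exact: H.
Qed.

Lemma vsum_ge0 F : (forall i, 0 <= F i) -> 0 <= vsum F.
Proof. by move=> H; rewrite -vsum_zero; exact: vsum_le. Qed.

Lemma vsum_abs F : Rabs (vsum F) <= vsum (fun i => Rabs (F i)).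
Proof.
rewrite /vsum; apply: (big_rec2 (fun a b => Rabs a <= b)).
- by rewrite Rabs_R0; lra.
- by move=> i y1 y2 _ H; apply: Rle_trans (Rabs_triang _ _) _; lra.
Qed.

Lemma vsum_term_le F i : (forall j, 0 <= F j) -> F i <= vsum F.
Proof.
move=> H; rewrite /vsum (bigD1 i) //= -[X in X <= _]Rplus_0_r.
apply: Rplus_le_compat_l.
by apply: (big_ind (fun a => 0 <= a)); [lra | move=> *; lra | move=> j _; exact: H].
Qed.

Lemma vsum_derivable (h : 'I_n -> R -> R) (l : 'I_n -> R) t0 :
  (forall k, derivable_pt_lim (h k) t0 (l k)) ->
  derivable_pt_lim (fun t => vsum (fun k => h k t)) t0 (vsum l).
Proof.
move=> H; rewrite /vsum; elim: (index_enum _) => [|a s IH].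
  rewrite big_nil; have -> : (fun t => \big[Rplus/0]_(k <- [::]) h k t) = fun _ => 0.
    by apply: functional_extensionality => t; rewrite big_nil.
  exact: derivable_pt_lim_const.
rewrite big_cons; have -> : (fun t => \big[Rplus/0]_(k <- a :: s) h k t) =
   fun t => h a t + \big[Rplus/0]_(k <- s) h k t.
  by apply: functional_extensionality => t; rewrite big_cons.
exact: derivable_pt_lim_plus (H a) IH.
Qed.

End FiniteSums.

Lemma vec_eq n (x y : vec n) : (forall i, x i = y i) -> x = y.
Proof. move=> H; apply: functional_extensionality => i; exact: H. Qed.

Lemma vadd_scale0 n (p w : vec n) : vadd p (vscale 0 w) = p.
Proof. by apply: vec_eq => j; rewrite /vadd /vscale; ring. Qed.

Lemma vbasis_sym n (i k : 'I_n) : vbasis k i = vbasis i k.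
Proof. by rewrite /vbasis eq_sym. Qed.

Lemma vbasis_abs_le1 n (k i : 'I_n) : Rabs (vbasis k i) <= 1.
Proof. by rewrite /vbasis; case: (i == k); rewrite ?Rabs_R1 ?Rabs_R0; lra. Qed.

Section Norm.
Context {n : nat}.
Implicit Types x y : vec n.

Lemma vnorm_ge0 x : 0 <= vnorm x.
Proof. exact: sqrt_pos. Qed.

Lemma vnorm_sq x : vnorm x * vnorm x = vsum (fun i => x i * x i).
Proof. by rewrite /vnorm sqrt_sqrt //; apply: vsum_ge0 => i; nra. Qed.

Lemma coord_le_vnorm x i : Rabs (x i) <= vnorm x.
Proof.
rewrite /vnorm -sqrt_Rsqr_abs; apply: sqrt_le_1_alt.
by rewrite /Rsqr; apply: (@vsum_term_le n (fun i => x i * x i)) => j; nra.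
Qed.

Lemma vnorm_eq0 x : vnorm x = 0 -> x = vzero.
Proof.
move=> H; apply: vec_eq => i; apply: Rabs_eq_0.
by have := coord_le_vnorm x i; have := Rabs_pos (x i); rewrite H /vzero; lra.
Qed.

Lemma vnorm_gt0 x : vnorm x <> 0 -> 0 < vnorm x.
Proof. by have := vnorm_ge0 x; lra. Qed.

Lemma vnorm_zero : vnorm (@vzero n) = 0.
Proof.
by rewrite /vnorm (vsum_ext _ (fun _ => 0)) ?vsum_zero ?sqrt_0 // => i; rewrite /vzero; ring.
Qed.

Lemma vnorm_le_sum_abs x : vnorm x <= vsum (fun i => Rabs (x i)).
Proof.
have [Hsq Hpos] : vsum (fun i => x i * x i) <=
    vsum (fun i => Rabs (x i)) * vsum (fun i => Rabs (x i)) /\ 0 <= vsum (fun i => Rabs (x i)).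
  rewrite /vsum; apply: (big_rec2 (fun a b => a <= b * b /\ 0 <= b)); first lra.
  move=> i y1 y2 _ [H1 H2]; have := Rabs_pos (x i); have := Rsqr_abs (x i); rewrite /Rsqr.
  by move=> E H3; split; [rewrite E; nra | lra].
by rewrite /vnorm -(sqrt_Rsqr _ Hpos); apply: sqrt_le_1_alt.
Qed.

Lemma vnorm_scale t x : vnorm (vscale t x) = Rabs t * vnorm x.
Proof.
rewrite /vnorm (vsum_ext _ (fun i => (t * t) * (x i * x i))); last by move=> i; rewrite /vscale; ring.
rewrite vsum_scal sqrt_mult; [|nra| by apply: vsum_ge0 => i; nra].
by rewrite -sqrt_Rsqr_abs.
Qed.

Lemma vnorm_basis (k : 'I_n) : vnorm (vbasis k) = 1.
Proof. by rewrite /vnorm (vsum_delta k (vbasis k)) /vbasis eqxx; exact: sqrt_1. Qed.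

End Norm.

(* [vec n] with the product (sup-norm) uniform structure, equivalent to the Euclidean one. *)
Definition Rn n := fct_UniformSpace 'I_n R_UniformSpace.

Lemma ball_R (x y : R) eps : ball x eps y <-> Rabs (y - x) < eps.
Proof. by split. Qed.

Lemma filter_forall_ord {T} (F : (T -> Prop) -> Prop) {FF : Filter F} n
  (P : 'I_n -> T -> Prop) : (forall k, F (P k)) -> F (fun y => forall k, P k y).
Proof.
move=> H.
have : forall s : seq 'I_n, F (fun y => forall k, k \in s -> P k y).
  elim=> [|a s IH]; first by apply: filter_forall => y k.
  apply: filter_imp (filter_and _ _ (H a) IH) => y [H1 H2] k.
  by rewrite in_cons => /orP [/eqP -> // | Hk]; exact: H2.
move=> /(_ (enum 'I_n)) Hs; apply: filter_imp Hs => y Hy k; apply: Hy; by rewrite mem_enum.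
Qed.

Lemma locally_R0 (P : R -> Prop) :
  locally 0 P -> exists d, 0 < d /\ forall t, Rabs t < d -> P t.
Proof.
case=> d Hd; exists d; split; first exact: cond_pos.
by move=> t Ht; apply: Hd; apply/ball_R; rewrite Rminus_0_r.
Qed.

Lemma locally_neq0 {U : UniformSpace} (h : U -> R) x :
  continuous h x -> h x <> 0 -> locally x (fun y => h y <> 0).
Proof.
move=> Hc Hx; have Hp : 0 < Rabs (h x) / 2 by have := Rabs_pos_lt _ Hx; lra.
move: Hc => /filterlim_locally /(_ (mkposreal _ Hp)).
apply: filter_imp => y /ball_R /= Hb E; rewrite E in Hb.
by rewrite Rminus_0_l Rabs_Ropp in Hb; lra.
Qed.

Section Continuity.
Context {U : UniformSpace}.

Lemma continuous_Rplus (f g : U -> R) x :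
  continuous f x -> continuous g x -> continuous (fun y => f y + g y) x.
Proof. exact: continuous_plus. Qed.

Lemma continuous_Rmult (f g : U -> R) x :
  continuous f x -> continuous g x -> continuous (fun y => f y * g y) x.
Proof. exact: continuous_mult. Qed.

Lemma continuous_Rminus (f g : U -> R) x :
  continuous f x -> continuous g x -> continuous (fun y => f y - g y) x.
Proof. by move=> *; apply: continuous_Rplus => //; exact: continuous_opp. Qed.

Lemma continuous_Rinv (f : U -> R) x :
  continuous f x -> f x <> 0 -> continuous (fun y => / f y) x.
Proof.
move=> H1 H2; apply: (continuous_comp f Rinv) => //.
by apply: (continuous_Rinv_comp (fun z => z)) => //; exact: continuous_id.
Qed.

Lemma continuous_Rsqrt (f : U -> R) x : continuous f x -> continuous (fun y => sqrt (f y)) x.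
Proof.
move=> H1; apply: (continuous_comp f sqrt) => //.
by apply: (continuous_sqrt_comp (fun z => z)); exact: continuous_id.
Qed.

Lemma continuous_vsum n (h : 'I_n -> U -> R) x : (forall k, continuous (h k) x) ->
  continuous (fun y => vsum (fun k => h k y)) x.
Proof.
move=> H; rewrite /vsum; elim: (index_enum _) => [|a s IH].
  by apply: continuous_ext (continuous_const 0 x) => y; rewrite big_nil.
by apply: continuous_ext (continuous_Rplus _ _ _ (H a) IH) => y; rewrite big_cons.
Qed.

Lemma continuous_vec n (F : U -> Rn n) x :
  (forall i, continuous (fun y => F y i) x) -> continuous F x.
Proof.
move=> H; apply/filterlim_locally => eps.
have : locally x (fun y => forall k, ball (F x k) eps (F y k)).
  apply: (filter_forall_ord (locally x) n (fun k y => ball (F x k) eps (F y k))) => k.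
  by move: (H k) => /filterlim_locally; apply.
by apply: filter_imp => y; exact.
Qed.

Lemma continuous_coord n (F : U -> Rn n) x i :
  continuous F x -> continuous (fun y => F y i) x.
Proof.
move=> /filterlim_locally H; apply/filterlim_locally => eps.
by apply: filter_imp (H eps) => y; exact.
Qed.

End Continuity.

Lemma continuous_of_pt (h : R -> R) s : continuity_pt h s -> continuous h s.
Proof. by move/continuity_pt_filterlim. Qed.

Lemma continuous_line n (x w : vec n) t0 :
  continuous (fun t : R => (vadd x (vscale t w) : Rn n)) t0.
Proof.
apply: (continuous_vec n (fun t : R => (vadd x (vscale t w) : Rn n))) => m.
rewrite /vadd /vscale; apply: continuous_Rplus; first exact: continuous_const.
by apply: continuous_Rmult; [exact: continuous_id | exact: continuous_const].
Qed.

Lemma continuous_vnorm n (v0 : Rn n) : continuous (fun v : Rn n => vnorm v) v0.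
Proof.
apply: continuous_Rsqrt; apply: (continuous_vsum n (fun i (v : Rn n) => v i * v i)) => i.
by apply: continuous_Rmult; apply: (continuous_coord n (fun y : Rn n => y)); exact: continuous_id.
Qed.

Lemma locally_vnorm_neq0 n (v0 : Rn n) :
  vnorm v0 <> 0 -> locally v0 (fun v : Rn n => vnorm v <> 0).
Proof. exact: locally_neq0 (continuous_vnorm n v0). Qed.

Lemma locally_vnorm_lt n r : 0 < r -> locally (vzero : Rn n) (fun v : Rn n => vnorm v < r).
Proof.
move=> Hr; move: (continuous_vnorm n (vzero : Rn n)) => /filterlim_locally /(_ (mkposreal _ Hr)).
apply: filter_imp => v /ball_R /=; rewrite vnorm_zero Rminus_0_r => H.
by have := Rle_abs (vnorm v); lra.
Qed.

Lemma vcontinuous_continuous n (g : vec n -> R) :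
  vcontinuous g -> forall x : Rn n, continuous g x.
Proof.
move=> H x; apply/filterlim_locally => eps.
have [d [Hd Hy]] := H x eps (cond_pos eps).
have HN := pos_INR n.
have Hd' : 0 < d / (INR n + 1) by apply: Rdiv_lt_0_compat => //; lra.
exists (mkposreal _ Hd') => y /= Hb; apply/ball_R; apply: Hy.
apply: Rle_lt_trans (vnorm_le_sum_abs _) _.
apply: Rle_lt_trans (vsum_le _ (fun _ => d / (INR n + 1)) _) _.
  move=> i; rewrite /vadd /vscale; have -> : y i + -1 * x i = y i - x i by ring.
  by have := Hb i => /ball_R; lra.
rewrite vsum_const.
have -> : INR n * (d / (INR n + 1)) = d - d / (INR n + 1) by field; lra.
lra.
Qed.

Lemma continuous_vcontinuous n (g : vec n -> R) :
  (forall x : Rn n, continuous g x) -> vcontinuous g.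
Proof.
move=> H x eps Heps; move: (H x) => /filterlim_locally /(_ (mkposreal _ Heps)) [d Hd].
exists d; split; first exact: cond_pos.
move=> y Hy; apply/ball_R; apply: Hd => i; apply/ball_R.
have E : (vadd y (vscale (-1) x)) i = y i - x i by rewrite /vadd /vscale; ring.
by rewrite -E; have := coord_le_vnorm (vadd y (vscale (-1) x)) i; lra.
Qed.

Lemma derivable_pt_lim_value (f : R -> R) x l l' :
  l = l' -> derivable_pt_lim f x l -> derivable_pt_lim f x l'.
Proof. by move=> ->. Qed.

Lemma derivable_pt_lim_affine a b t0 : derivable_pt_lim (fun t => a + t * b) t0 b.
Proof. by apply/is_derive_Reals; auto_derive => //; ring. Qed.

Definition has_derivative {n} (g : vec n -> R) (y D : vec n) :=
  forall eps, 0 < eps -> exists delta, 0 < delta /\ forall h : vec n,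
    (forall i, Rabs (h i) < delta) ->
    Rabs (g (vadd y h) - g y - vsum (fun i => D i * h i)) <= eps * vsum (fun i => Rabs (h i)).

Lemma is_grad_unique n (g : vec n -> R) x v w : is_grad g x v -> is_grad g x w -> v = w.
Proof. by move=> H1 H2; apply: vec_eq => i; exact: uniqueness_limite (H1 i) (H2 i). Qed.

Lemma has_partial_line n (g : vec n -> R) i (p : vec n) c l :
  has_partial g i (vadd p (vscale c (vbasis i))) l ->
  derivable_pt_lim (fun t => g (vadd p (vscale t (vbasis i)))) c l.
Proof.
rewrite /has_partial => H eps He; have [d Hd] := H eps He; exists d => h Hh Hhd.
have E1 : vadd (vadd p (vscale c (vbasis i))) (vscale (0 + h) (vbasis i)) =
   vadd p (vscale (c + h) (vbasis i)) by apply: vec_eq => j; rewrite /vadd /vscale; ring.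
have E2 : vadd (vadd p (vscale c (vbasis i))) (vscale 0 (vbasis i)) =
   vadd p (vscale c (vbasis i)) by rewrite vadd_scale0.
by have := Hd h Hh Hhd; rewrite E1 E2.
Qed.

Section C1Differentiable.
Variables (n : nat) (g : vec n -> R) (Dg : vec n -> vec n).
Hypothesis Hg : forall y, is_grad g y (Dg y).

Lemma coordinate_mvt (p : vec n) i a : exists c, Rabs c <= Rabs a /\
  g (vadd p (vscale a (vbasis i))) - g p = Dg (vadd p (vscale c (vbasis i))) i * a.
Proof.
have Hd c : derivable_pt_lim (fun t => g (vadd p (vscale t (vbasis i)))) c
              (Dg (vadd p (vscale c (vbasis i))) i) by apply: has_partial_line; exact: Hg.
case: (Rtotal_order a 0) => [Ha|[Ha|Ha]].
- have [c [Hc1 Hc2]] := MVT_cor2 _ _ a 0 Ha (fun c _ => Hd c).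
  exists c; split; first by rewrite !Rabs_left1; lra.
  by rewrite vadd_scale0 in Hc1; lra.
- by exists 0; rewrite Ha vadd_scale0; split; [lra | ring].
- have [c [Hc1 Hc2]] := MVT_cor2 _ _ 0 a Ha (fun c _ => Hd c).
  exists c; split; first by rewrite !Rabs_right; lra.
  by rewrite vadd_scale0 in Hc1; lra.
Qed.

Lemma coordinate_increment_le (p x : vec n) i a eps :
  (forall c, Rabs c <= Rabs a -> Rabs (Dg (vadd p (vscale c (vbasis i))) i - Dg x i) < eps) ->
  Rabs (g (vadd p (vscale a (vbasis i))) - g p - Dg x i * a) <= eps * Rabs a.
Proof.
move=> Hc; have [c [Hca ->]] := coordinate_mvt p i a.
rewrite -Rmult_minus_distr_r Rabs_mult.
by apply: Rmult_le_compat_r; [exact: Rabs_pos | left; exact: Hc].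
Qed.

Definition vtrunc (h : vec n) (k : nat) : vec n := fun i => if (i < k)%N then h i else 0.

Lemma vtrunc_succ (h : vec n) k (Hk : (k < n)%N) i :
  vtrunc h k.+1 i = vtrunc h k i + h (Ordinal Hk) * vbasis (Ordinal Hk) i.
Proof.
rewrite /vtrunc /vbasis ltnS.
have Hne : (nat_of_ord i != k) -> (i == Ordinal Hk) = false.
  by move=> H; apply/negbTE; apply: contra H => /eqP ->.
case: (ltngtP i k) => Hik.
- by rewrite Hne ?neq_ltn ?Hik //; ring.
- by rewrite Hne ?neq_ltn ?Hik ?orbT //; ring.
- have -> : i = Ordinal Hk by apply: val_inj.
  by rewrite eqxx; ring.
Qed.

(* Telescoping over the coordinates of [h], each step being bounded by the mean value theorem. *)
Lemma C1_remainder_vtrunc (x : Rn n) eps d (h : vec n) :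
  (forall y : Rn n, ball x d y -> forall i, Rabs (Dg y i - Dg x i) < eps) ->
  (forall i, Rabs (h i) < d) -> forall k,
  Rabs (g (vadd x (vtrunc h k)) - g x - vsum (fun i => Dg x i * vtrunc h k i))
     <= eps * vsum (fun i => Rabs (vtrunc h k i)).
Proof.
move=> Hd Hh; elim=> [|k IH].
  have -> : vtrunc h 0 = vzero by apply: vec_eq => i; rewrite /vtrunc ltn0.
  have -> : vadd x vzero = x by apply: vec_eq => i; rewrite /vadd /vzero; ring.
  rewrite /vzero (vsum_ext _ (fun _ => 0)) => [|i]; last ring.
  rewrite (vsum_ext _ (fun _ => 0)) => [|i]; last exact: Rabs_R0.
  by rewrite vsum_zero Rminus_0_r Rminus_eq_0 Rabs_R0; lra.
case: (ltnP k n) => Hk; last first.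
  have -> // : vtrunc h k.+1 = vtrunc h k.
  apply: vec_eq => i; rewrite /vtrunc; have Hi := ltn_ord i.
  by rewrite (leq_trans Hi (leqW Hk)) (leq_trans Hi Hk).
set i0 := Ordinal Hk; set p := vadd x (vtrunc h k).
have Ep : vadd x (vtrunc h k.+1) = vadd p (vscale (h i0) (vbasis i0)).
  by apply: vec_eq => i; rewrite /p /vadd /vscale (vtrunc_succ h k Hk) -/i0; ring.
have Hball c : Rabs c <= Rabs (h i0) -> Rabs (Dg (vadd p (vscale c (vbasis i0))) i0 - Dg x i0) < eps.
  move=> Hch; apply: Hd => j; apply/ball_R; rewrite /p /vadd /vscale vbasis_sym.
  have -> : x j + vtrunc h k j + c * vbasis j i0 - x j = vtrunc h k j + c * vbasis j i0 by ring.
  rewrite /vbasis /vtrunc; case: (eqVneq j i0) => [->|Nj].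
    by rewrite ltnn Rmult_1_r Rplus_0_l; have := Hh i0; lra.
  by case: (j < k)%N; have := Hh j; have := Rabs_pos (h j); rewrite ?Rmult_0_r ?Rplus_0_r ?Rabs_R0; lra.
rewrite Ep (vsum_ext _ (fun i => Dg x i * vtrunc h k i + vbasis i0 i * (Dg x i * h i0)));
  last by move=> i; rewrite (vtrunc_succ h k Hk) -/i0; ring.
rewrite (vsum_ext (fun i => Rabs (vtrunc h k.+1 i))
    (fun i => Rabs (vtrunc h k i) + vbasis i0 i * Rabs (h i0))); last first.
  move=> i; rewrite (vtrunc_succ h k Hk) -/i0 /vbasis /vtrunc; case: (eqVneq i i0) => [->|Ni].
    by rewrite /i0 /= ltnn Rmult_1_r Rmult_1_l Rplus_0_l Rabs_R0 Rplus_0_l.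
  by rewrite !Rmult_0_r Rmult_0_l !Rplus_0_r.
rewrite !vsum_add !vsum_delta.
have -> : g (vadd p (vscale (h i0) (vbasis i0))) - g x -
   (vsum (fun i => Dg x i * vtrunc h k i) + Dg x i0 * h i0) =
   (g p - g x - vsum (fun i => Dg x i * vtrunc h k i)) +
   (g (vadd p (vscale (h i0) (vbasis i0))) - g p - Dg x i0 * h i0) by ring.
apply: Rle_trans (Rabs_triang _ _) _.
by have := coordinate_increment_le p x i0 (h i0) eps Hball; rewrite /p in IH *; lra.
Qed.

Lemma C1_has_derivative (x : Rn n) :
  (forall i, continuous (fun y : Rn n => Dg y i) x) -> has_derivative g x (Dg x).
Proof.
move=> Hc eps He.
have : locally x (fun y : Rn n => forall i, Rabs (Dg y i - Dg x i) < eps).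
  apply: (filter_forall_ord (locally x) n (fun i y => Rabs (Dg y i - Dg x i) < eps)) => i.
  by move: (Hc i) => /filterlim_locally /(_ (mkposreal _ He)).
case=> d Hd; exists d; split; first exact: cond_pos.
move=> h Hh; have := C1_remainder_vtrunc x eps d h Hd Hh n.
have -> // : vtrunc h n = h by apply: vec_eq => i; rewrite /vtrunc ltn_ord.
Qed.

End C1Differentiable.

Lemma derivable_increment_small (u : R -> R) t0 l e d :
  derivable_pt_lim u t0 l -> 0 < e <= 1 -> 0 < d ->
  locally 0 (fun tau => tau <> 0 ->
    Rabs ((u (t0 + tau) - u t0) / tau - l) < e /\ Rabs (u (t0 + tau) - u t0) < d).
Proof.
move=> Hu He Hd.
have Hq : 0 < d / (Rabs l + 1) by apply: Rdiv_lt_0_compat => //; have := Rabs_pos l; lra.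
have [dk Hdk] := Hu e (proj1 He).
exists (mkposreal _ (Rmin_pos _ _ (cond_pos dk) Hq)) => tau /ball_R Ht Htau.
rewrite Rminus_0_r /= in Ht.
have Ht1 : Rabs tau < dk by apply: Rlt_le_trans Ht _; apply: Rmin_l.
have Ht2 : Rabs tau < d / (Rabs l + 1) by apply: Rlt_le_trans Ht _; apply: Rmin_r.
have H1 := Hdk tau Htau Ht1; split => //.
set q := (u (t0 + tau) - u t0) / tau in H1.
have -> : u (t0 + tau) - u t0 = tau * q by rewrite /q; field.
have Hq1 : Rabs q <= Rabs l + 1 by have := Rabs_triang_inv q l; lra.
have Hl : 0 < Rabs l + 1 by have := Rabs_pos l; lra.
rewrite Rabs_mult; apply: Rle_lt_trans (Rmult_le_compat_l _ _ _ (Rabs_pos tau) Hq1) _.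
have := Rmult_lt_compat_r _ _ _ Hl Ht2.
by rewrite /Rdiv Rmult_assoc Rinv_l ?Rmult_1_r; lra.
Qed.

Lemma remainder_quotient_le n (r e tau : R) (h u' : vec n) :
  tau <> 0 -> 0 <= e -> Rabs r <= e * vsum (fun i => Rabs (h i)) ->
  (forall k, Rabs (h k / tau - u' k) <= 1) ->
  Rabs (r / tau) <= e * vsum (fun k => Rabs (u' k) + 1).
Proof.
move=> Htau He Hr Hq; have Hat : 0 < Rabs tau by apply: Rabs_pos_lt.
rewrite Rabs_div //; apply: (Rle_trans _ (e * vsum (fun i => Rabs (h i)) / Rabs tau)).
  by rewrite /Rdiv; apply: Rmult_le_compat_r; [left; apply: Rinv_0_lt_compat |].
rewrite /Rdiv Rmult_assoc -vsum_scalr; apply: Rmult_le_compat_l => //.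
apply: vsum_le => k; have := Rabs_triang_inv (h k / tau) (u' k); have := Hq k.
by rewrite Rabs_div // /Rdiv; lra.
Qed.

Lemma frac_lt_half eps A : 0 < eps -> 0 <= A -> eps / (2 * (A + 1)) * A < eps / 2.
Proof.
move=> He HA; have -> : eps / (2 * (A + 1)) * A = eps / 2 - eps / (2 * (A + 1)) by field; lra.
have : 0 < eps / (2 * (A + 1)) by apply: Rdiv_lt_0_compat; lra.
lra.
Qed.

Lemma has_derivative_comp n (g : vec n -> R) (y D : vec n) (u : R -> vec n) (u' : vec n) t0 :
  has_derivative g y D -> u t0 = y ->
  (forall k, derivable_pt_lim (fun t => u t k) t0 (u' k)) ->
  derivable_pt_lim (fun t => g (u t)) t0 (vsum (fun k => D k * u' k)).
Proof.
move=> Hf Ey Hd eps He.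
set A := vsum (fun k => Rabs (u' k) + 1).
set B := vsum (fun k => Rabs (D k)) + 1.
have HA : 0 <= A by apply: vsum_ge0 => k; have := Rabs_pos (u' k); lra.
have HB : 1 <= B by have := vsum_ge0 _ (fun k => Rabs_pos (D k)); rewrite /B; lra.
have He1 : 0 < eps / (2 * (A + 1)) by apply: Rdiv_lt_0_compat; lra.
have [d1 [Hd1 Hf1]] := Hf _ He1.
set e2 := Rmin 1 (eps / (2 * B)).
have He2 : 0 < e2 <= 1 by split; [apply: Rmin_pos; [lra | apply: Rdiv_lt_0_compat; lra] | exact: Rmin_l].
have [d [Hd0 Hdd]] := locally_R0 _ (filter_forall_ord (locally 0) n _
  (fun k => derivable_increment_small _ t0 _ _ _ (Hd k) He2 Hd1)).
exists (mkposreal _ Hd0) => tau Htau Ht /=.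
have {Hdd} Ht' k := Hdd tau Ht k Htau.
set h : vec n := fun k => u (t0 + tau) k - u t0 k.
set q : vec n := fun k => h k / tau.
have Hfr := Hf1 h (fun i => proj2 (Ht' i)).
have -> : u (t0 + tau) = vadd y h by rewrite -Ey; apply: vec_eq => k; rewrite /vadd /h; ring.
rewrite Ey.
have -> : (g (vadd y h) - g y) / tau - vsum (fun k => D k * u' k) =
   (g (vadd y h) - g y - vsum (fun i => D i * h i)) / tau + vsum (fun k => D k * (q k - u' k)).
  rewrite (vsum_ext (fun k => D k * (q k - u' k)) (fun k => D k * h k * / tau - D k * u' k));
    last by move=> k; rewrite /q /Rdiv; ring.
  by rewrite vsum_sub vsum_scalr; field.
apply: Rle_lt_trans (Rabs_triang _ _) _.
have T1 : Rabs ((g (vadd y h) - g y - vsum (fun i => D i * h i)) / tau) <= eps / (2 * (A + 1)) * A.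
  apply: (remainder_quotient_le n _ _ tau h) => //; first lra.
  by move=> k; have := proj1 (Ht' k); rewrite -/(h k); have := proj2 He2; lra.
have T2 : Rabs (vsum (fun k => D k * (q k - u' k))) <= (B - 1) * e2.
  apply: Rle_trans (vsum_abs _) _; rewrite /B.
  have -> : vsum (fun k => Rabs (D k)) + 1 - 1 = vsum (fun k => Rabs (D k)) by ring.
  rewrite -vsum_scalr; apply: vsum_le => k; rewrite Rabs_mult.
  apply: Rmult_le_compat_l; first exact: Rabs_pos.
  by have := proj1 (Ht' k); rewrite -/(h k) -/(q k); lra.
have T2' : (B - 1) * e2 < eps / 2.
  have : e2 <= eps / (2 * B) by apply: Rmin_r.
  have : 0 < eps / (2 * B) by apply: Rdiv_lt_0_compat; lra.
  have -> : eps / 2 = B * (eps / (2 * B)) by field; lra.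
  nra.
by have := frac_lt_half eps A He HA; lra.
Qed.

Lemma has_derivative_continuous n (g : vec n -> R) y D :
  has_derivative g y D -> continuous (g : Rn n -> R) y.
Proof.
move=> Hf; apply/filterlim_locally => eps.
have [d [Hd Hfd]] := Hf 1 Rlt_0_1.
set S := vsum (fun i => Rabs (D i)) + INR n + 1.
have HS : 1 <= S by have := vsum_ge0 _ (fun k => Rabs_pos (D k)); have := pos_INR n; rewrite /S; lra.
set r := Rmin d (eps / S).
have Hr : 0 < r by apply: Rmin_pos => //; apply: Rdiv_lt_0_compat; [exact: cond_pos | lra].
exists (mkposreal _ Hr) => z Hz; apply/ball_R.
set h : vec n := fun i => z i - y i.
have Ez : z = vadd y h by apply: vec_eq => i; rewrite /vadd /h Rplus_minus.
have Hh i : Rabs (h i) < r by exact: (Hz i).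
have := Hfd h (fun i => Rlt_le_trans _ _ _ (Hh i) (Rmin_l _ _)); rewrite -Ez => H1.
have H2 : Rabs (vsum (fun i => D i * h i)) <= vsum (fun i => Rabs (D i)) * r.
  apply: Rle_trans (vsum_abs _) _; rewrite -vsum_scalr; apply: vsum_le => i; rewrite Rabs_mult.
  by apply: Rmult_le_compat_l; [exact: Rabs_pos | left; exact: Hh].
have H3 : vsum (fun i => Rabs (h i)) <= INR n * r.
  by rewrite -vsum_const; apply: vsum_le => i; left; exact: Hh.
have H4 : S * r <= eps.
  have : S * r <= S * (eps / S) by apply: Rmult_le_compat_l; [lra | exact: Rmin_r].
  by have -> : S * (eps / S) = eps by field; lra.
have := Rabs_triang (g z - g y - vsum (fun i => D i * h i)) (vsum (fun i => D i * h i)).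
have -> : g z - g y - vsum (fun i => D i * h i) + vsum (fun i => D i * h i) = g z - g y by ring.
by rewrite /S in H4; lra.
Qed.

Lemma C1_line_derivable n (g : vec n -> R) (Dg : vec n -> vec n) (x w : vec n) t0 :
  (forall y, is_grad g y (Dg y)) ->
  (forall i, continuous (fun y : Rn n => Dg y i) (vadd x (vscale t0 w))) ->
  derivable_pt_lim (fun t => g (vadd x (vscale t w))) t0
     (vsum (fun k => Dg (vadd x (vscale t0 w)) k * w k)).
Proof.
move=> Hg Hc; apply: (has_derivative_comp _ g _ _ (fun t => vadd x (vscale t w))) => //.
  exact: C1_has_derivative.
by move=> k; rewrite /vadd /vscale; exact: derivable_pt_lim_affine.
Qed.

Definition C2_with {n} (g : vec n -> R) (Dg : vec n -> vec n)
    (D2g : vec n -> 'I_n -> 'I_n -> R) :=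
  (forall y, is_grad g y (Dg y)) /\
  (forall y i j, has_partial (fun z => Dg z i) j y (D2g y i j)) /\
  (forall i (y : Rn n), continuous (fun z : Rn n => Dg z i) y) /\
  (forall i j (y : Rn n), continuous (fun z : Rn n => D2g z i j) y).

Lemma C2funP n (g : vec n -> R) : C2fun g <-> exists Dg D2g, C2_with g Dg D2g.
Proof.
split.
- case=> Dg [D2g [H1 [H2 [H3 H4]]]]; exists Dg, D2g.
  by do 3!split => //; move=> *; apply: vcontinuous_continuous.
- case=> Dg [D2g [H1 [H2 [H3 H4]]]]; exists Dg, D2g.
  by do 3!split => //; move=> *; apply: continuous_vcontinuous.
Qed.

Lemma C2_with_hess n (g : vec n -> R) Dg D2g x :
  C2_with g Dg D2g -> is_hess g x (D2g x).
Proof. by case=> H1 [H2 _]; exists Dg. Qed.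

Lemma is_hess_unique n (g : vec n -> R) Dg D2g x H :
  C2_with g Dg D2g -> is_hess g x H -> H = D2g x.
Proof.
case=> H1 [H2 _] [Dg' [HDg HH]].
have EDg : Dg' = Dg by apply: functional_extensionality => y; exact: is_grad_unique (HDg y) (H1 y).
apply: functional_extensionality => i; apply: functional_extensionality => j.
by rewrite EDg in HH; exact: uniqueness_limite (HH i j) (H2 x i j).
Qed.

Definition quad_form {n} (H : 'I_n -> 'I_n -> R) (w : vec n) :=
  vsum (fun k => mat_app H w k * w k).

Section LineRestriction.
Variables (n : nat) (g : vec n -> R) (Dg : vec n -> vec n) (D2g : vec n -> 'I_n -> 'I_n -> R).
Hypothesis HC2 : C2_with g Dg D2g.

Lemma C2_line_derivable (x w : vec n) t0 :
  derivable_pt_lim (fun t => g (vadd x (vscale t w))) t0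
     (vsum (fun k => Dg (vadd x (vscale t0 w)) k * w k)).
Proof. by case: HC2 => H1 [_ [H3 _]]; apply: C1_line_derivable. Qed.

Lemma C2_line_derivable2 (x w : vec n) t0 :
  derivable_pt_lim (fun t => vsum (fun k => Dg (vadd x (vscale t w)) k * w k)) t0
     (quad_form (D2g (vadd x (vscale t0 w))) w).
Proof.
case: HC2 => _ [H2 [_ H4]]; apply: vsum_derivable => k.
apply: derivable_pt_lim_scal_right.
apply: (C1_line_derivable _ (fun z => Dg z k) (fun y j => D2g y k j)) => [y j | j].
- exact: H2.
- exact: H4.
Qed.

End LineRestriction.

Lemma continuity_2d_pt_vec n (Q : R -> R -> vec n) (h : vec n -> R) a b :
  (forall k, continuity_2d_pt (fun u v => Q u v k) a b) ->
  continuous (h : Rn n -> R) (Q a b) -> continuity_2d_pt (fun u v => h (Q u v)) a b.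
Proof.
move=> HQ Hh; apply/continuity_2d_pt_filterlim.
apply: (filterlim_comp _ _ _ (fun z : R * R => (Q z.1 z.2 : Rn n)) h); last exact: Hh.
apply: (continuous_vec n (fun z : R * R => (Q z.1 z.2 : Rn n)) (a, b)) => k.
by move: (HQ k) => /continuity_2d_pt_filterlim.
Qed.

Lemma continuity_2d_pt_affine (c p q : R) a b :
  continuity_2d_pt (fun u v => c + u * p + v * q) a b.
Proof.
apply: continuity_2d_pt_plus; first apply: continuity_2d_pt_plus.
- exact: continuity_2d_pt_const.
- by apply: continuity_2d_pt_mult; [exact: continuity_2d_pt_id1 | exact: continuity_2d_pt_const].
- by apply: continuity_2d_pt_mult; [exact: continuity_2d_pt_id2 | exact: continuity_2d_pt_const].
Qed.

Lemma continuity_2d_pt_vsum n (h : 'I_n -> R -> R -> R) a b :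
  (forall k, continuity_2d_pt (h k) a b) ->
  continuity_2d_pt (fun u v => vsum (fun k => h k u v)) a b.
Proof.
move=> H; rewrite /vsum; elim: (index_enum _) => [|c s IH].
  apply: (continuity_2d_pt_ext (fun _ _ => 0)); first by move=> *; rewrite big_nil.
  exact: continuity_2d_pt_const.
apply: (continuity_2d_pt_ext (fun u v => h c u v + \big[Rplus/0]_(k <- s) h k u v)).
  by move=> *; rewrite big_cons.
exact: continuity_2d_pt_plus.
Qed.

(* Schwarz's theorem, through the planar restriction of [g] to the (i, j) coordinate plane at [x]. *)
Lemma C2_hess_sym n (g : vec n -> R) Dg D2g : C2_with g Dg D2g ->
  forall x i j, D2g x i j = D2g x j i.
Proof.
case=> H1 [H2 [H3 H4]] x i j.
set P := fun a b => vadd (vadd x (vscale a (vbasis i))) (vscale b (vbasis j)).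
set f2 := fun a b => g (P a b).
have EP a b : P a b = vadd (vadd x (vscale b (vbasis j))) (vscale a (vbasis i)).
  by apply: vec_eq => k; rewrite /P /vadd /vscale; ring.
have D1 a b : is_derive (fun z => f2 z b) a (Dg (P a b) i).
  apply/is_derive_Reals; apply: (derivable_pt_lim_ext
    (fun z => g (vadd (vadd x (vscale b (vbasis j))) (vscale z (vbasis i))))).
    by move=> z; rewrite /f2 EP.
  by apply: has_partial_line; rewrite -EP; exact: H1.
have D2 a b : is_derive (fun z => f2 a z) b (Dg (P a b) j).
  by apply/is_derive_Reals; apply: has_partial_line; exact: H1.
have E1 b : (fun z => Derive (fun t => f2 t z) b) = fun z => Dg (P b z) i.
  by apply: functional_extensionality => z; exact: is_derive_unique (D1 b z).
have E2 a : (fun z => Derive (fun t => f2 z t) a) = fun z => Dg (P z a) j.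
  by apply: functional_extensionality => z; exact: is_derive_unique (D2 z a).
have DD1 a b : is_derive (fun z => Dg (P a z) i) b (D2g (P a b) i j).
  by apply/is_derive_Reals; apply: (has_partial_line _ (fun y => Dg y i)); exact: H2.
have DD2 a b : is_derive (fun z => Dg (P z b) j) a (D2g (P a b) j i).
  apply/is_derive_Reals; apply: (derivable_pt_lim_ext
    (fun z => Dg (vadd (vadd x (vscale b (vbasis j))) (vscale z (vbasis i))) j)).
    by move=> z; rewrite EP.
  by apply: (has_partial_line _ (fun y => Dg y j)); rewrite -EP; exact: H2.
have CP (k l : 'I_n) u v : continuity_2d_pt (fun u v => D2g (P u v) k l) u v.
  apply: (continuity_2d_pt_vec _ P (fun y => D2g y k l)); last exact: H4.
  by move=> m; rewrite /P /vadd /vscale; exact: continuity_2d_pt_affine.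
have S := Schwarz f2 0 0.
rewrite E2 E1 (is_derive_unique _ _ _ (DD2 0 0)) (is_derive_unique _ _ _ (DD1 0 0)) in S.
have -> : x = P 0 0 by apply: vec_eq => k; rewrite /P /vadd /vscale; ring.
symmetry; apply: S.
- exists (mkposreal _ Rlt_0_1) => u v _ _; split; [|split; [|split]].
  + by eexists; exact: D1.
  + by eexists; exact: D2.
  + by rewrite E2; eexists; exact: DD2.
  + by rewrite E1; eexists; exact: DD1.
- apply: (continuity_2d_pt_ext (fun u v => D2g (P u v) j i)) (CP j i 0 0).
  by move=> u v; rewrite E2 (is_derive_unique _ _ _ (DD2 u v)).
- apply: (continuity_2d_pt_ext (fun u v => D2g (P u v) i j)) (CP i j 0 0).
  by move=> u v; rewrite E1 (is_derive_unique _ _ _ (DD1 u v)).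
Qed.

Definition convex_R (q : R -> R) := forall a b t, 0 <= t <= 1 ->
  q (t * a + (1 - t) * b) <= t * q a + (1 - t) * q b.

Lemma nondecreasing_derive_ge0 (p : R -> R) s l :
  (forall a b, a < b -> p a <= p b) -> derivable_pt_lim p s l -> 0 <= l.
Proof.
move=> Hm Hd; apply: Rnot_lt_le => Hl.
have [d Hd'] := Hd (- l) ltac:(lra).
have Hd2 : 0 < d / 2 by have := cond_pos d; lra.
have := Hd' (d / 2) ltac:(lra) ltac:(rewrite Rabs_right; have := cond_pos d; lra).
have := Hm s (s + d / 2) ltac:(lra) => H1.
have : 0 <= (p (s + d / 2) - p s) / (d / 2) by apply: Rdiv_le_0_compat; lra.
by move=> H2 H3; have := Rle_abs ((p (s + d / 2) - p s) / (d / 2) - l); lra.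
Qed.

Lemma derive_le_of_slopes (q : R -> R) s l m c : 0 < c -> derivable_pt_lim q s l ->
  (forall h, 0 < h < c -> (q (s + h) - q s) / h <= m) -> l <= m.
Proof.
move=> Hc Hd Hsl; apply: Rnot_lt_le => Hlt.
have [d Hd'] := Hd (l - m) ltac:(lra).
set h := Rmin (d / 2) (c / 2).
have Hh : 0 < h by apply: Rmin_pos; have := cond_pos d; lra.
have Hhd : h <= d / 2 by apply: Rmin_l.
have Hhc : h <= c / 2 by apply: Rmin_r.
have := cond_pos d => Hd0.
have := Hd' h ltac:(lra) ltac:(rewrite Rabs_right; lra).
have := Hsl h ltac:(lra).
by move=> H1 /Rabs_def2; lra.
Qed.

Lemma derive_ge_of_slopes (q : R -> R) t l m c : 0 < c -> derivable_pt_lim q t l ->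
  (forall h, 0 < h < c -> m <= (q (t + - h) - q t) / - h) -> m <= l.
Proof.
move=> Hc Hd Hsl; apply: Rnot_lt_le => Hlt.
have [d Hd'] := Hd (m - l) ltac:(lra).
set h := Rmin (d / 2) (c / 2).
have Hh : 0 < h by apply: Rmin_pos; have := cond_pos d; lra.
have Hhd : h <= d / 2 by apply: Rmin_l.
have Hhc : h <= c / 2 by apply: Rmin_r.
have := cond_pos d => Hd0.
have := Hd' (- h) ltac:(lra) ltac:(rewrite Rabs_left; lra).
have := Hsl h ltac:(lra).
by move=> H1 /Rabs_def2; lra.
Qed.

Section ConvexSlopes.
Variables (q : R -> R) (s t h : R).
Hypotheses (Hq : convex_R q) (Hh : 0 < h) (Hst : h <= t - s).

Let Hl : 0 <= h / (t - s) <= 1.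
Proof.
split; first by apply: Rdiv_le_0_compat; lra.
apply: (Rmult_le_reg_r (t - s)); first lra.
by rewrite /Rdiv Rmult_assoc Rinv_l; lra.
Qed.

Lemma convex_slope_left : (q (s + h) - q s) / h <= (q t - q s) / (t - s).
Proof.
have := Hq t s (h / (t - s)) Hl.
have -> : h / (t - s) * t + (1 - h / (t - s)) * s = s + h by field; lra.
move=> Hcv; apply: (Rmult_le_reg_r h) => //.
have -> : (q (s + h) - q s) / h * h = q (s + h) - q s by field; lra.
have -> : (q t - q s) / (t - s) * h = h / (t - s) * q t - h / (t - s) * q s by field; lra.
lra.
Qed.

Lemma convex_slope_right : (q t - q s) / (t - s) <= (q (t + - h) - q t) / - h.
Proof.
have := Hq s t (h / (t - s)) Hl.
have -> : h / (t - s) * s + (1 - h / (t - s)) * t = t + - h by field; lra.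
move=> Hcv; apply: (Rmult_le_reg_r h) => //.
have -> : (q (t + - h) - q t) / - h * h = q t - q (t + - h) by field; lra.
have -> : (q t - q s) / (t - s) * h = h / (t - s) * q t - h / (t - s) * q s by field; lra.
lra.
Qed.

End ConvexSlopes.

Lemma convex_derive_nondecreasing (q q' : R -> R) :
  convex_R q -> (forall s, derivable_pt_lim q s (q' s)) ->
  forall s t, s < t -> q' s <= q' t.
Proof.
move=> Hc Hd s t Hst; apply: (Rle_trans _ ((q t - q s) / (t - s))).
- apply: (derive_le_of_slopes q s _ _ (t - s)) => [| // | h Hh]; first lra.
  by apply: convex_slope_left => //; lra.
- apply: (derive_ge_of_slopes q t _ _ (t - s)) => [| // | h Hh]; first lra.
  by apply: convex_slope_right => //; lra.
Qed.

Lemma derive_ge0_nondecreasing (p p' : R -> R) :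
  (forall s, derivable_pt_lim p s (p' s)) -> (forall s, 0 <= p' s) ->
  forall a b, a < b -> p a <= p b.
Proof.
move=> Hd Hp a b Hab; have [c [Hc _]] := MVT_cor2 p p' a b Hab (fun c _ => Hd c).
by have := Hp c; nra.
Qed.

Lemma nondecreasing_derive_convex (p p' : R -> R) t :
  (forall s, derivable_pt_lim p s (p' s)) -> (forall a b, a < b -> p' a <= p' b) ->
  0 <= t <= 1 -> p t <= t * p 1 + (1 - t) * p 0.
Proof.
move=> Hd Hm Ht.
case: (Req_dec t 0) => [->|H0]; first lra.
case: (Req_dec t 1) => [->|H1]; first lra.
have [c1 [E1 Hc1]] := MVT_cor2 p p' 0 t ltac:(lra) (fun c _ => Hd c).
have [c2 [E2 Hc2]] := MVT_cor2 p p' t 1 ltac:(lra) (fun c _ => Hd c).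
have := Hm c1 c2 ltac:(lra) => Hle.
have : 0 <= t * (1 - t) by nra.
nra.
Qed.

Section ConvexHessian.
Variables (n : nat) (g : vec n -> R) (Dg : vec n -> vec n) (D2g : vec n -> 'I_n -> 'I_n -> R).
Hypothesis HC2 : C2_with g Dg D2g.

Lemma convex_hess_psd : convex g -> forall x w, 0 <= quad_form (D2g x) w.
Proof.
move=> Hc x w.
set q := fun t => g (vadd x (vscale t w)).
have Hcv : convex_R q.
  move=> a b t Ht; rewrite /q.
  have -> : vadd x (vscale (t * a + (1 - t) * b) w) =
     vadd (vscale t (vadd x (vscale a w))) (vscale (1 - t) (vadd x (vscale b w))).
    by apply: vec_eq => i; rewrite /vadd /vscale; ring.
  exact: Hc.
have Hm := convex_derive_nondecreasing q _ Hcv (C2_line_derivable _ _ _ _ HC2 x w).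
have := C2_line_derivable2 _ _ _ _ HC2 x w 0.
by rewrite vadd_scale0; exact: nondecreasing_derive_ge0 Hm.
Qed.

Lemma hess_psd_convex : (forall x w, 0 <= quad_form (D2g x) w) -> convex g.
Proof.
move=> Hpsd x y t Ht.
set w := vadd x (vscale (-1) y).
have Hm := derive_ge0_nondecreasing _ _ (C2_line_derivable2 _ _ _ _ HC2 y w) (fun s => Hpsd _ w).
have := nondecreasing_derive_convex _ _ t (C2_line_derivable _ _ _ _ HC2 y w) Hm Ht.
have -> : vadd y (vscale t w) = vadd (vscale t x) (vscale (1 - t) y).
  by apply: vec_eq => i; rewrite /w /vadd /vscale; ring.
have -> : vadd y (vscale 1 w) = x by apply: vec_eq => i; rewrite /w /vadd /vscale; ring.
by rewrite vadd_scale0.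
Qed.

End ConvexHessian.

(* [radial G v] is the vector of length [G |v|] along [v]; at [v = 0] Rocq's [/ 0 = 0] makes it [0]. *)
Definition radial {n} (G : R -> R) (v : vec n) : vec n := vscale (G (vnorm v) / vnorm v) v.

(* Entry [(i, k)] is the [k]-th partial derivative of the [i]-th component of [radial G] at [v]. *)
Definition radial_jacobian {n} (G G' : R -> R) (v : vec n) (i k : 'I_n) : R :=
  if Req_EM_T (vnorm v) 0 then G' 0 * vbasis k i
  else G (vnorm v) / vnorm v * vbasis k i +
       (G' (vnorm v) - G (vnorm v) / vnorm v) * (v i * v k) / (vnorm v * vnorm v).

Lemma radial_jacobian0 n G G' (v : vec n) i k :
  vnorm v = 0 -> radial_jacobian G G' v i k = G' 0 * vbasis k i.
Proof. by rewrite /radial_jacobian; case: Req_EM_T. Qed.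

Lemma radial_jacobianE n G G' (v : vec n) i k : vnorm v <> 0 ->
  radial_jacobian G G' v i k = G (vnorm v) / vnorm v * vbasis k i +
    (G' (vnorm v) - G (vnorm v) / vnorm v) * (v i * v k) / (vnorm v * vnorm v).
Proof. by rewrite /radial_jacobian; case: Req_EM_T. Qed.

Lemma radial_zero n G : radial G (@vzero n) = vzero.
Proof. by apply: vec_eq => j; rewrite /radial /vscale /vzero; ring. Qed.

Lemma vnorm_line_derivable n (v : vec n) k : vnorm v <> 0 ->
  derivable_pt_lim (fun t => vnorm (vadd v (vscale t (vbasis k)))) 0 (v k / vnorm v).
Proof.
move=> Hv; have Hs := vnorm_gt0 v Hv; set s := vnorm v in Hv Hs *.
apply: (derivable_pt_lim_ext (comp sqrt (fun t => s * s + 2 * t * v k + t * t))).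
  move=> t; rewrite /comp /vnorm; f_equal.
  rewrite (vsum_ext _ (fun m => v m * v m + (2 * t) * (vbasis k m * v m) +
                               (t * t) * (vbasis k m * vbasis k m))); last first.
    by move=> m; rewrite /vadd /vscale; ring.
  by rewrite !vsum_add !vsum_scal !vsum_delta -vnorm_sq /vbasis eqxx -/s; ring.
apply: (derivable_pt_lim_value _ _ (/ (2 * sqrt (s * s + 2 * 0 * v k + 0 * 0)) * (2 * v k))).
  have -> : s * s + 2 * 0 * v k + 0 * 0 = s * s by ring.
  by rewrite sqrt_square; [field; lra | lra].
apply: derivable_pt_lim_comp; last by apply: derivable_pt_lim_sqrt; nra.
by apply/is_derive_Reals; auto_derive => //; ring.
Qed.

Section RadialMap.
Variables (G G' : R -> R).
Hypothesis HG : forall s, derivable_pt_lim G s (G' s).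
Hypothesis HG' : continuity G'.
Hypothesis HG0 : G 0 = 0.

Lemma G_continuous s : continuous G s.
Proof. by apply: continuous_of_pt; apply: derivable_continuous_pt; exists (G' s); exact: HG. Qed.

(* At the origin, [G s / s] tends to [G' 0]. *)
Lemma radial_partial0 n i k :
  has_partial (fun w => radial G w i) k (@vzero n) (G' 0 * vbasis k i).
Proof.
set c := vbasis k i.
apply: (derivable_pt_lim_ext (fun t => G (Rabs t) / Rabs t * (t * c))).
  move=> t; have -> : vadd vzero (vscale t (vbasis k)) = vscale t (vbasis k).
    by apply: vec_eq => j; rewrite /vadd /vzero; ring.
  by rewrite /radial vnorm_scale vnorm_basis Rmult_1_r /vscale /c; ring.
move=> eps He; have [d Hd] := HG 0 eps He.
exists d => h Hh Hhd.
have Hah : Rabs h <> 0 by apply: Rabs_no_R0.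
rewrite Rabs_R0 HG0 /Rdiv Rinv_0 !Rmult_0_l Rminus_0_r Rplus_0_l.
have -> : G (Rabs h) * / Rabs h * (h * c) * / h - G' 0 * c = c * (G (Rabs h) / Rabs h - G' 0).
  by field; split.
rewrite Rabs_mult.
have := Hd (Rabs h) Hah ltac:(by rewrite Rabs_Rabsolu).
rewrite Rplus_0_l HG0 Rminus_0_r => H1.
have := vbasis_abs_le1 _ k i; rewrite -/c => H2.
by have := Rabs_pos c; have := Rabs_pos (G (Rabs h) / Rabs h - G' 0); nra.
Qed.

Lemma radial_partial n (v : vec n) i k :
  has_partial (fun w => radial G w i) k v (radial_jacobian G G' v i k).
Proof.
case: (Req_EM_T (vnorm v) 0) => Hv.
  by rewrite (vnorm_eq0 v Hv) radial_jacobian0 ?vnorm_zero //; exact: radial_partial0.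
rewrite radial_jacobianE //; have Hs := vnorm_gt0 v Hv; set s := vnorm v in Hv Hs *.
set N := fun t => vnorm (vadd v (vscale t (vbasis k))).
have N0 : N 0 = s by rewrite /N vadd_scale0.
have dN : derivable_pt_lim N 0 (v k / s) by exact: vnorm_line_derivable.
have dGN : derivable_pt_lim (fun t => G (N t)) 0 (G' s * (v k / s)).
  by apply: (derivable_pt_lim_comp N G); rewrite ?N0.
have := derivable_pt_lim_mult _ _ _ _ _ (derivable_pt_lim_div _ _ _ _ _ dGN dN ltac:(rewrite N0; lra))
  (derivable_pt_lim_affine (v i) (vbasis k i) 0).
rewrite /mult_fct /div_fct N0 => H.
apply: (derivable_pt_lim_value _ _ _ _ _ (derivable_pt_lim_ext _ _ _ _ _ H)).
- by rewrite /Rsqr; field; lra.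
- by move=> t; rewrite /radial /vscale /vadd.
Qed.

Lemma radial_jacobian_continuous0 n i k :
  continuous (fun v : Rn n => radial_jacobian G G' v i k) vzero.
Proof.
apply/filterlim_locally => eps.
have He3 : 0 < eps / 3 by have := cond_pos eps; lra.
have [d1 Hd1] := HG 0 (eps / 3) He3.
have : locally 0 (fun s => ball (G' 0) (mkposreal _ He3) (G' s)).
  by move: (continuous_of_pt G' 0 (HG' 0)) => /filterlim_locally; apply.
case/locally_R0 => d2 [Hd2 Hd2'].
have Hm : 0 < Rmin d1 d2 by apply: Rmin_pos => //; exact: cond_pos.
apply: filter_imp (locally_vnorm_lt n _ Hm) => v Hv; apply/ball_R.
rewrite [radial_jacobian _ _ vzero _ _]radial_jacobian0 ?vnorm_zero //.
case: (Req_EM_T (vnorm v) 0) => Hv'.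
  by rewrite radial_jacobian0 // Rminus_eq_0 Rabs_R0; exact: cond_pos.
rewrite radial_jacobianE //; have Hs := vnorm_gt0 v Hv'; set s := vnorm v in Hv Hv' Hs *.
have Hs1 : s < d1 by apply: Rlt_le_trans Hv (Rmin_l _ _).
have Hs2 : s < d2 by apply: Rlt_le_trans Hv (Rmin_r _ _).
have A1 : Rabs (G s / s - G' 0) < eps / 3.
  have := Hd1 s ltac:(lra) ltac:(rewrite Rabs_right; lra).
  by rewrite Rplus_0_l HG0 Rminus_0_r.
have A2 : Rabs (G' s - G' 0) < eps / 3 by have := Hd2' s ltac:(rewrite Rabs_right; lra).
set r := v i * v k / (s * s).
have Hr : Rabs r <= 1.
  rewrite /r Rabs_div; last by nra.
  rewrite Rabs_mult (Rabs_right (s * s)); last by nra.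
  apply: (Rmult_le_reg_r (s * s)); first nra.
  rewrite /Rdiv Rmult_assoc Rinv_l; last by nra.
  have := coord_le_vnorm v i; have := coord_le_vnorm v k; rewrite -/s => H1 H2.
  by have := Rabs_pos (v i); have := Rabs_pos (v k); nra.
have -> : G s / s * vbasis k i + (G' s - G s / s) * (v i * v k) / (s * s) - G' 0 * vbasis k i
       = (G s / s - G' 0) * vbasis k i + ((G' s - G' 0) - (G s / s - G' 0)) * r.
  by rewrite /r; field; lra.
clearbody r; apply: Rle_lt_trans (Rabs_triang _ _) _; rewrite !Rabs_mult.
have := vbasis_abs_le1 _ k i => Hc.
have B : Rabs ((G' s - G' 0) - (G s / s - G' 0)) < 2 * (eps / 3).
  by apply: Rle_lt_trans (Rabs_triang _ _) _; rewrite Rabs_Ropp; lra.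
have := Rabs_pos (G s / s - G' 0); have := Rabs_pos ((G' s - G' 0) - (G s / s - G' 0)).
by nra.
Qed.

Lemma radial_jacobian_continuous n i k (v0 : Rn n) :
  continuous (fun v : Rn n => radial_jacobian G G' v i k) v0.
Proof.
case: (Req_EM_T (vnorm v0) 0) => Hv0.
  by rewrite (vnorm_eq0 v0 Hv0); exact: radial_jacobian_continuous0.
set E := fun v : Rn n => G (vnorm v) / vnorm v * vbasis k i +
     (G' (vnorm v) - G (vnorm v) / vnorm v) * (v i * v k) / (vnorm v * vnorm v).
apply: (continuous_ext_loc _ E).
  apply: filter_imp (locally_vnorm_neq0 n v0 Hv0) => v Hv.
  by rewrite radial_jacobianE.
have cN := continuous_vnorm n v0.
have cG : continuous (fun v : Rn n => G (vnorm v)) v0.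
  by apply: (continuous_comp _ G) => //; exact: G_continuous.
have cG' : continuous (fun v : Rn n => G' (vnorm v)) v0.
  by apply: (continuous_comp _ G') => //; apply: continuous_of_pt; exact: HG'.
have ca : continuous (fun v : Rn n => G (vnorm v) / vnorm v) v0.
  by apply: continuous_Rmult => //; exact: continuous_Rinv.
have cc m : continuous (fun v : Rn n => v m) v0.
  by apply: (continuous_coord n (fun y : Rn n => y)); exact: continuous_id.
apply: continuous_Rplus; first by apply: continuous_Rmult => //; exact: continuous_const.
apply: continuous_Rmult.
  by apply: continuous_Rmult; [exact: continuous_Rminus | exact: continuous_Rmult].
by apply: continuous_Rinv; [exact: continuous_Rmult | move=> H; apply: Hv0; nra].
Qed.

Lemma radial_has_derivative n (v : Rn n) i :
  has_derivative (fun w => radial G w i) v (fun k => radial_jacobian G G' v i k).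
Proof.
apply: (C1_has_derivative _ _ (fun w k => radial_jacobian G G' w i k)).
- by move=> y k; exact: radial_partial.
- by move=> k; exact: radial_jacobian_continuous.
Qed.

Lemma radial_continuous n (v : Rn n) i : continuous (fun w : Rn n => radial G w i) v.
Proof. exact: (has_derivative_continuous n (fun w => radial G w i) v _ (radial_has_derivative n v i)). Qed.

End RadialMap.

Definition dot {n} (u w : vec n) := vsum (fun i => u i * w i).

Section LinearAlgebra.
Context {n : nat}.
Implicit Types (H : 'I_n -> 'I_n -> R) (v w : vec n).

Lemma dot_vv v : dot v v = vnorm v * vnorm v.
Proof. by rewrite vnorm_sq. Qed.

Lemma quad_formE H w : quad_form H w = dot (mat_app H w) w.
Proof. by []. Qed.

Lemma quad_form_rank1_update H v a c w :
  quad_form (fun i j => a * H i j + c * (v i * v j)) w = a * quad_form H w + c * dot v w * dot v w.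
Proof.
rewrite /quad_form /mat_app /dot.
rewrite (vsum_ext _ (fun k => a * (vsum (fun j => H k j * w j) * w k) +
                             (c * vsum (fun j => v j * w j)) * (v k * w k))); last first.
  move=> k; rewrite (vsum_ext _ (fun j => a * (H k j * w j) + (c * v k) * (v j * w j)));
    last by move=> j; ring.
  by rewrite vsum_add !vsum_scal; ring.
by rewrite vsum_add !vsum_scal; ring.
Qed.

Lemma dot_mat_app_sym H v w : (forall i j, H i j = H j i) ->
  dot (mat_app H w) v = dot w (mat_app H v).
Proof.
move=> Hs; rewrite /dot /mat_app.
rewrite (vsum_ext _ (fun i => vsum (fun j => H i j * w j * v i))); last first.
  by move=> i; rewrite -vsum_scalr.
rewrite vsum_swap; apply: vsum_ext => j.
by rewrite -vsum_scal; apply: vsum_ext => i; rewrite (Hs i j); ring.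
Qed.

Lemma mat_app_sub_scale H w v (al : R) :
  mat_app H (fun i => w i - al * v i) = fun i => mat_app H w i - al * mat_app H v i.
Proof.
apply: functional_extensionality => i; rewrite /mat_app.
rewrite (vsum_ext _ (fun j => H i j * w j - al * (H i j * v j))); last by move=> j; ring.
by rewrite vsum_sub vsum_scal.
Qed.

Lemma mat_app_scale H a v : mat_app H (vscale a v) = vscale a (mat_app H v).
Proof.
apply: functional_extensionality => i; rewrite /mat_app /vscale -vsum_scal.
by apply: vsum_ext => j; ring.
Qed.

Lemma mat_app_zero H : mat_app H vzero = vscale 0 vzero.
Proof.
apply: functional_extensionality => i; rewrite /mat_app /vscale /vzero.
by rewrite (vsum_ext _ (fun _ => 0)) ?vsum_zero => *; ring.
Qed.

Lemma quad_form_eigen_split H v (lam : R) w : (forall i j, H i j = H j i) ->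
  mat_app H v = vscale lam v -> dot v v <> 0 ->
  quad_form H w = quad_form H (fun i => w i - dot v w / dot v v * v i)
                  + lam * (dot v w * dot v w) / dot v v.
Proof.
move=> Hs Hv Hvv; set al := dot v w / dot v v.
rewrite !quad_formE mat_app_sub_scale Hv /vscale.
have E1 : dot (mat_app H w) v = lam * dot v w.
  by rewrite dot_mat_app_sym // Hv /dot /vscale -vsum_scal; apply: vsum_ext => i; ring.
have -> : dot (fun i => mat_app H w i - al * (lam * v i)) (fun i => w i - al * v i) =
   dot (mat_app H w) w - al * dot (mat_app H w) v - al * lam * dot v w + al * al * lam * dot v v.
  rewrite /dot (vsum_ext _ (fun i => mat_app H w i * w i - al * (mat_app H w i * v i)
                              - (al * lam) * (v i * w i) + (al * al * lam) * (v i * v i)));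
    last by move=> i; ring.
  by rewrite vsum_add (vsum_sub (fun i => mat_app H w i * w i - al * (mat_app H w i * v i)))
    vsum_sub !vsum_scal.
by rewrite E1 /al; field.
Qed.

Lemma mat_app_rank1_update H v (a c lam : R) : mat_app H v = vscale lam v ->
  mat_app (fun i j => a * H i j + c * (v i * v j)) v = vscale (a * lam + c * dot v v) v.
Proof.
move=> Hv; apply: functional_extensionality => i.
have := f_equal (fun z => z i) Hv; rewrite /mat_app /vscale /dot => E.
rewrite (vsum_ext _ (fun j => a * (H i j * v j) + (c * v i) * (v j * v j))); last by move=> j; ring.
by rewrite vsum_add !vsum_scal E; ring.
Qed.

End LinearAlgebra.

Section RadialGradient.
Variables (n : nat) (f : vec n -> R) (Df : vec n -> vec n) (D2f : vec n -> 'I_n -> 'I_n -> R).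
Hypothesis HC2 : C2_with f Df D2f.
Variables (G G' : R -> R).
Hypothesis HG : forall s, derivable_pt_lim G s (G' s).
Hypothesis HG' : continuity G'.
Hypothesis HG0 : G 0 = 0.

Definition radial_grad (y : vec n) := radial G (Df y).

Definition radial_grad_jacobian (y : vec n) i j :=
  vsum (fun k => radial_jacobian G G' (Df y) i k * D2f y k j).

Lemma grad_continuous (y : Rn n) : continuous (Df : Rn n -> Rn n) y.
Proof. by case: HC2 => _ [_ [H3 _]]; apply: continuous_vec => k; exact: H3. Qed.

Lemma radial_grad_partial y i j :
  has_partial (fun z => radial_grad z i) j y (radial_grad_jacobian y i j).
Proof.
case: HC2 => _ [H2 _].
apply: (has_derivative_comp n (fun w => radial G w i) (Df y) _
          (fun t => Df (vadd y (vscale t (vbasis j))))) => [| | k].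
- exact: radial_has_derivative.
- by rewrite vadd_scale0.
- exact: H2.
Qed.

Lemma radial_grad_continuous i (y : Rn n) : continuous (fun z : Rn n => radial_grad z i) y.
Proof.
apply: (continuous_comp (Df : Rn n -> Rn n) (fun w : Rn n => radial G w i)).
  exact: grad_continuous.
exact: radial_continuous.
Qed.

Lemma radial_grad_jacobian_continuous i j (y : Rn n) :
  continuous (fun z : Rn n => radial_grad_jacobian z i j) y.
Proof.
case: HC2 => _ [_ [_ H4]].
apply: (continuous_vsum n (fun k (z : Rn n) => radial_jacobian G G' (Df z) i k * D2f z k j)) => k.
apply: continuous_Rmult; last exact: H4.
apply: (continuous_comp (Df : Rn n -> Rn n) (fun w : Rn n => radial_jacobian G G' w i k)).
  exact: grad_continuous.
exact: radial_jacobian_continuous.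
Qed.

Lemma radial_grad_jacobian0 y i j :
  vnorm (Df y) = 0 -> radial_grad_jacobian y i j = G' 0 * D2f y i j.
Proof.
move=> Hv; rewrite /radial_grad_jacobian.
rewrite (vsum_ext _ (fun k => vbasis i k * (G' 0 * D2f y k j))); last first.
  by move=> k; rewrite radial_jacobian0 // vbasis_sym; ring.
by rewrite vsum_delta.
Qed.

Lemma radial_grad_jacobianE y i j : vnorm (Df y) <> 0 ->
  radial_grad_jacobian y i j = G (vnorm (Df y)) / vnorm (Df y) * D2f y i j +
     (G' (vnorm (Df y)) - G (vnorm (Df y)) / vnorm (Df y)) / (vnorm (Df y) * vnorm (Df y)) *
       (Df y i * mat_app (D2f y) (Df y) j).
Proof.
move=> Hv; rewrite /radial_grad_jacobian.
have E := radial_jacobianE n G G' (Df y); set s := vnorm (Df y) in Hv E *; set v := Df y in E *.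
rewrite (vsum_ext _ (fun k => G s / s * (vbasis i k * D2f y k j) +
     ((G' s - G s / s) * v i / (s * s)) * (D2f y j k * v k))); last first.
  by move=> k; rewrite E // vbasis_sym (C2_hess_sym _ _ _ _ HC2 y k j); field.
by rewrite vsum_add !vsum_scal vsum_delta /mat_app; field.
Qed.

Lemma radial_grad_jacobian_eigen y lam : vnorm (Df y) <> 0 ->
  mat_app (D2f y) (Df y) = vscale lam (Df y) ->
  radial_grad_jacobian y = fun i j =>
    G (vnorm (Df y)) / vnorm (Df y) * D2f y i j +
    (G' (vnorm (Df y)) - G (vnorm (Df y)) / vnorm (Df y)) * lam / (vnorm (Df y) * vnorm (Df y))
      * (Df y i * Df y j).
Proof.
move=> Hv Hl; apply: functional_extensionality => i; apply: functional_extensionality => j.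
rewrite radial_grad_jacobianE // Hl /vscale; field.
by apply: Rgt_not_eq; apply: vnorm_gt0.
Qed.

Lemma radial_grad_jacobian_sym y lam i j : mat_app (D2f y) (Df y) = vscale lam (Df y) ->
  radial_grad_jacobian y i j = radial_grad_jacobian y j i.
Proof.
move=> Hl; case: (Req_EM_T (vnorm (Df y)) 0) => Hv.
  by rewrite !radial_grad_jacobian0 // (C2_hess_sym _ _ _ _ HC2).
by rewrite (radial_grad_jacobian_eigen y lam) // (C2_hess_sym _ _ _ _ HC2 y i j); ring.
Qed.

End RadialGradient.

Section Potential.
Variables (n : nat) (F : vec n -> vec n) (JF : vec n -> 'I_n -> 'I_n -> R).
Hypothesis HFp : forall y i j, has_partial (fun z => F z i) j y (JF y i j).
Hypothesis HFc : forall i (y : Rn n), continuous (fun z : Rn n => F z i) y.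
Hypothesis HJc : forall i j (y : Rn n), continuous (fun z : Rn n => JF z i j) y.
Hypothesis HJs : forall y i j, JF y i j = JF y j i.

Definition potential (x : vec n) := RInt (fun t => vsum (fun i => F (vscale t x) i * x i)) 0 1.

Lemma field_line_derivable (a w : vec n) i t0 :
  derivable_pt_lim (fun t => F (vadd a (vscale t w)) i) t0
    (vsum (fun m => JF (vadd a (vscale t0 w)) i m * w m)).
Proof.
apply: (C1_line_derivable n (fun z => F z i) (fun y m => JF y i m)) => [y m | m].
- exact: HFp.
- exact: HJc.
Qed.

Section PartialDerivative.
Variables (x : vec n) (j : 'I_n).

(* The integrand of [potential (x + u e_j)], as a function of [u] and [t]. *)
Let Z t u := vadd (vscale t x) (vscale u (vscale t (vbasis j))).
Let k u t := vsum (fun i => F (Z t u) i * (x i + u * vbasis j i)).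
Let Dk u t := vsum (fun i => (t * JF (Z t u) i j) * (x i + u * vbasis j i) +
                             F (Z t u) i * vbasis j i).

Let potential_shift u : potential (vadd x (vscale u (vbasis j))) = RInt (k u) 0 1.
Proof.
rewrite /potential /k; f_equal; apply: functional_extensionality => t.
apply: vsum_ext => i.
have -> : vscale t (vadd x (vscale u (vbasis j))) = Z t u.
  by apply: vec_eq => m; rewrite /Z /vadd /vscale; ring.
by rewrite /vadd /vscale.
Qed.

Let integrand_derive u t : is_derive (fun u => k u t) u (Dk u t).
Proof.
apply/is_derive_Reals; apply: vsum_derivable => i.
apply: (derivable_pt_lim_mult (fun u => F (Z t u) i) (fun u => x i + u * vbasis j i));
  last exact: derivable_pt_lim_affine.
apply: (derivable_pt_lim_value _ _ (vsum (fun m => JF (Z t u) i m * vscale t (vbasis j) m))).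
  rewrite (vsum_ext _ (fun m => vbasis j m * (t * JF (Z t u) i m))); last first.
    by move=> m; rewrite /vscale; ring.
  by rewrite vsum_delta.
exact: field_line_derivable.
Qed.

Let Z_continuous m u t : continuity_2d_pt (fun u v => Z v u m) u t.
Proof.
rewrite /Z /vadd /vscale; apply: continuity_2d_pt_plus.
  by apply: continuity_2d_pt_mult; [exact: continuity_2d_pt_id2 | exact: continuity_2d_pt_const].
apply: continuity_2d_pt_mult; first exact: continuity_2d_pt_id1.
by apply: continuity_2d_pt_mult; [exact: continuity_2d_pt_id2 | exact: continuity_2d_pt_const].
Qed.

Let integrand_derive_continuous t : continuity_2d_pt Dk 0 t.
Proof.
rewrite /Dk; apply: continuity_2d_pt_vsum => i.
have Hcoef : continuity_2d_pt (fun u _ => x i + u * vbasis j i) 0 t.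
  apply: continuity_2d_pt_plus; first exact: continuity_2d_pt_const.
  by apply: continuity_2d_pt_mult; [exact: continuity_2d_pt_id1 | exact: continuity_2d_pt_const].
apply: continuity_2d_pt_plus; apply: continuity_2d_pt_mult => //.
- apply: continuity_2d_pt_mult; first exact: continuity_2d_pt_id2.
  apply: (continuity_2d_pt_vec n (fun u v => Z v u) (fun y => JF y i j)) => [m|].
  + exact: Z_continuous.
  + exact: HJc.
- apply: (continuity_2d_pt_vec n (fun u v => Z v u) (fun y => F y i)) => [m|].
  + exact: Z_continuous.
  + exact: HFc.
- exact: continuity_2d_pt_const.
Qed.

Let potential_shift_derive : is_derive (fun u => RInt (k u) 0 1) 0 (RInt (Dk 0) 0 1).
Proof.
have -> : RInt (Dk 0) 0 1 = RInt (fun t => Derive (fun u => k u t) 0) 0 1.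
  by apply: RInt_ext => t _; rewrite (is_derive_unique _ _ _ (integrand_derive 0 t)).
apply: is_derive_RInt_param.
- by apply: filter_forall => u0 t _; eexists; exact: integrand_derive.
- move=> t _; apply: (continuity_2d_pt_ext Dk); last exact: integrand_derive_continuous.
  by move=> u v; symmetry; exact: is_derive_unique (integrand_derive u v).
- apply: filter_forall => u; apply: ex_RInt_continuous => z _.
  rewrite /k; apply: (continuous_vsum n (fun i t => F (Z t u) i * (x i + u * vbasis j i))) => i.
  apply: continuous_Rmult; last exact: continuous_const.
  apply: (continuous_comp (fun t : R => (Z t u : Rn n)) (fun y : Rn n => F y i)); last exact: HFc.
  apply: (continuous_vec n (fun t : R => (Z t u : Rn n))) => m; rewrite /Z /vadd /vscale.
  apply: continuous_Rplus; apply: continuous_Rmult; try exact: continuous_id; try exact: continuous_const.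
  by apply: continuous_Rmult; [exact: continuous_id | exact: continuous_const].
Qed.

(* By the symmetry of [JF], the integrand [Dk 0] is the derivative of [s |-> s F(s x)_j]. *)
Let integrand_derive_primitive s :
  Dk 0 s = F (vscale s x) j + s * vsum (fun m => JF (vscale s x) j m * x m).
Proof.
rewrite /Dk; have -> : Z s 0 = vscale s x by rewrite /Z vadd_scale0.
rewrite (vsum_ext _ (fun i => s * (JF (vscale s x) j i * x i) + vbasis j i * F (vscale s x) i));
  last by move=> i; rewrite HJs; ring.
by rewrite vsum_add vsum_scal vsum_delta; ring.
Qed.

Let integral_integrand_derive : RInt (Dk 0) 0 1 = F x j.
Proof.
set dF := fun s => F (vscale s x) j + s * vsum (fun m => JF (vscale s x) j m * x m).
have Hs s : continuous (fun r : R => (vscale r x : Rn n)) s.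
  apply: (continuous_vec n (fun r : R => (vscale r x : Rn n))) => m; rewrite /vscale.
  by apply: continuous_Rmult; [exact: continuous_id | exact: continuous_const].
have HdF s : derivable_pt_lim (fun s => s * F (vscale s x) j) s (dF s).
  have Ez r : vadd vzero (vscale r x) = vscale r x.
    by apply: vec_eq => m; rewrite /vadd /vzero; ring.
  have := field_line_derivable vzero x j s; rewrite Ez => H1.
  have := derivable_pt_lim_mult id _ s 1 _ (derivable_pt_lim_id s)
    (derivable_pt_lim_ext _ (fun t => F (vscale t x) j) _ _ (fun t => f_equal (fun z => F z j) (Ez t)) H1).
  by rewrite /mult_fct /id /dF => H2; apply: (derivable_pt_lim_value _ _ _ _ _ H2); ring.
have HdFc s : continuous dF s.
  rewrite /dF; apply: continuous_Rplus.
    by apply: (continuous_comp (fun r : R => (vscale r x : Rn n)) (fun y : Rn n => F y j)).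
  apply: continuous_Rmult; first exact: continuous_id.
  apply: (continuous_vsum n (fun m r => JF (vscale r x) j m * x m)) => m.
  apply: continuous_Rmult; last exact: continuous_const.
  by apply: (continuous_comp (fun r : R => (vscale r x : Rn n)) (fun y : Rn n => JF y j m)).
have HI := is_RInt_derive (fun s => s * F (vscale s x) j) dF 0 1
             (fun s _ => proj2 (is_derive_Reals _ _ _) (HdF s)) (fun s _ => HdFc s).
rewrite (RInt_ext _ dF); last by move=> t _; exact: integrand_derive_primitive.
rewrite (is_RInt_unique _ _ _ _ HI).
have -> : vscale 1 x = x by apply: vec_eq => m; rewrite /vscale; ring.
by rewrite /minus /plus /opp /=; ring.
Qed.

Lemma potential_partial : has_partial potential j x (F x j).
Proof.
apply: (derivable_pt_lim_ext (fun u => RInt (k u) 0 1)); first by move=> u; rewrite potential_shift.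
by rewrite -integral_integrand_derive; apply/is_derive_Reals; exact: potential_shift_derive.
Qed.

End PartialDerivative.

Lemma potential_C2 : C2_with potential F JF.
Proof. by split; [move=> y i; exact: potential_partial | split]. Qed.

End Potential.

Lemma nondecr_derive_ge0 (G G' : R -> R) s :
  nondecr G -> derivable_pt_lim G s (G' s) -> 0 <= G' s.
Proof. by move=> Hm; apply: nondecreasing_derive_ge0 => a b Hab; apply: Hm; lra. Qed.

Lemma classF_eigen n (g : vec n -> R) Dg D2g :
  classF g -> C2_with g Dg D2g -> forall y, exists lam, mat_app (D2g y) (Dg y) = vscale lam (Dg y).
Proof.
case=> _ [_ Heig] HC2 y; apply: Heig; last exact: (C2_with_hess _ _ _ _ _ HC2).
by case: HC2.
Qed.

Section RadialPotential.
Variables (n : nat) (f : vec n -> R) (Df : vec n -> vec n) (D2f : vec n -> 'I_n -> 'I_n -> R).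
Hypothesis HC2 : C2_with f Df D2f.
Hypothesis Hconv : convex f.
Hypothesis Heig : forall y, exists lam, mat_app (D2f y) (Df y) = vscale lam (Df y).
Variables (G G' : R -> R).
Hypothesis HG : forall s, derivable_pt_lim G s (G' s).
Hypothesis HG' : continuity G'.
Hypothesis HG0 : G 0 = 0.
Hypothesis Hmono : nondecr G.

Local Notation Fr := (radial_grad n Df G).
Local Notation Jr := (radial_grad_jacobian n Df D2f G G').

Definition radial_potential := potential n Fr.

Lemma radial_potential_C2 : C2_with radial_potential Fr Jr.
Proof.
apply: potential_C2.
- exact: (radial_grad_partial n f Df D2f HC2 G G' HG HG' HG0).
- exact: (radial_grad_continuous n f Df D2f HC2 G G' HG HG' HG0).
- exact: (radial_grad_jacobian_continuous n f Df D2f HC2 G G' HG HG' HG0).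
- move=> y i j; have [lam Hl] := Heig y.
  exact: (radial_grad_jacobian_sym n f Df D2f HC2 G G' y lam i j Hl).
Qed.

Lemma radial_grad_jacobian_psd y w : 0 <= quad_form (Jr y) w.
Proof.
have Hpsd := convex_hess_psd _ _ _ _ HC2 Hconv y.
case: (Req_EM_T (vnorm (Df y)) 0) => Hv.
  have -> : Jr y = fun i j => G' 0 * D2f y i j + 0 * (Df y i * Df y j).
    apply: functional_extensionality => i; apply: functional_extensionality => j.
    by rewrite radial_grad_jacobian0 //; ring.
  rewrite quad_form_rank1_update.
  by have := nondecr_derive_ge0 _ _ 0 Hmono (HG 0); have := Hpsd w; nra.
have [lam Hl] := Heig y.
rewrite (radial_grad_jacobian_eigen _ _ _ _ HC2 _ _ y lam Hv Hl) quad_form_rank1_update.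
have Hs := vnorm_gt0 _ Hv; set v := Df y in Hl Hv Hs *; set s := vnorm v in Hv Hs *.
have Hvv : dot v v = s * s by rewrite dot_vv.
rewrite (quad_form_eigen_split (D2f y) v lam w (C2_hess_sym _ _ _ _ HC2 y) Hl ltac:(nra)).
have Ha : 0 <= G s / s by apply: Rdiv_le_0_compat => //; rewrite -HG0; apply: Hmono; lra.
have Hlam : 0 <= lam.
  have := Hpsd v; rewrite quad_formE Hl.
  have -> : dot (vscale lam v) v = lam * dot v v.
    by rewrite /dot /vscale -vsum_scal; apply: vsum_ext => i; ring.
  rewrite Hvv => H; have Hss : 0 < s * s by nra.
  apply: Rnot_lt_le => Hl0; have : lam * (s * s) < 0 by nra.
  lra.
have HG's := nondecr_derive_ge0 _ _ s Hmono (HG s).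
set w' := fun i => w i - dot v w / dot v v * v i.
have Hq := Hpsd w'.
have -> : G s / s * (quad_form (D2f y) w' + lam * (dot v w * dot v w) / dot v v) +
    (G' s - G s / s) * lam / (s * s) * dot v w * dot v w =
    G s / s * quad_form (D2f y) w' + G' s * lam / (s * s) * (dot v w * dot v w).
  by rewrite Hvv; field; lra.
have : 0 <= G' s * lam / (s * s) by apply: Rdiv_le_0_compat; nra.
by have := Rmult_le_pos _ _ Ha Hq; nra.
Qed.

Lemma radial_potential_eigen x : exists lam, mat_app (Jr x) (Fr x) = vscale lam (Fr x).
Proof.
case: (Req_EM_T (vnorm (Df x)) 0) => Hv.
  by exists 0; rewrite /radial_grad (vnorm_eq0 _ Hv) radial_zero mat_app_zero.
have [lam Hl] := Heig x.
rewrite (radial_grad_jacobian_eigen _ _ _ _ HC2 _ _ x lam Hv Hl) /radial_grad /radial.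
set a := G (vnorm (Df x)) / vnorm (Df x).
set c := (G' (vnorm (Df x)) - a) * lam / (vnorm (Df x) * vnorm (Df x)).
exists (a * lam + c * dot (Df x) (Df x)).
rewrite mat_app_scale (mat_app_rank1_update _ _ _ _ _ Hl).
by apply: functional_extensionality => i; rewrite /vscale; ring.
Qed.

Lemma radial_potential_classF : classF radial_potential.
Proof.
split; first by apply: hess_psd_convex radial_potential_C2 _; exact: radial_grad_jacobian_psd.
split; first by apply/C2funP; exists Fr, Jr; exact: radial_potential_C2.
move=> x w H Hw HH.
have [P1 _] := radial_potential_C2.
rewrite (is_grad_unique _ _ _ _ _ Hw (P1 x)) (is_hess_unique _ _ _ _ _ _ radial_potential_C2 HH).
exact: radial_potential_eigen.
Qed.

End RadialPotential.

Section IntervalCover.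
Variables (al be : nat -> R).
Hypothesis Hab : forall k, al k < be k.

Lemma cover_length_ge N (s : seq nat) : (size s <= N)%N -> forall c1 c2, c1 <= c2 ->
  (forall c, c1 <= c <= c2 -> exists k, k \in s /\ al k < c < be k) ->
  c2 - c1 <= \big[Rplus/0]_(k <- s) (be k - al k).
Proof.
have Hge0 (s' : seq nat) : 0 <= \big[Rplus/0]_(k <- s') (be k - al k).
  by apply: (big_ind (fun x => 0 <= x)); [lra | move=> *; lra | move=> k _; have := Hab k; lra].
elim: N s => [|N IH] s Hs c1 c2 H12 Hc.
  have [k [Hk _]] := Hc c2 ltac:(lra).
  by move: Hs; rewrite leqn0 => /nilP Es; rewrite Es in Hk.
have [j [Hj [Hj1 Hj2]]] := Hc c2 ltac:(lra).
rewrite (big_rem j Hj) /=.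
have H0 := Hge0 (rem j s).
case: (Rlt_le_dec (al j) c1) => Hc1; first lra.
have Hsize : (size (rem j s) <= N)%N by rewrite size_rem //; move: Hs; case: (size s).
have Hcov c : c1 <= c <= al j -> exists k, k \in rem j s /\ al k < c < be k.
  move=> Hc'; have [k [Hk [Hk1 Hk2]]] := Hc c ltac:(lra).
  exists k; split => //; apply: rem_mem => //.
  by apply/eqP => E; rewrite E in Hk1; lra.
by apply: Rle_trans (Rplus_le_compat_l (be j - al j) _ _ (IH _ Hsize _ _ Hc1 Hcov)); lra.
Qed.

(* Heine-Borel for a cover of [c1, c2] by the open intervals (al k, be k), via a supremum argument. *)
Lemma finite_subcover c1 c2 : c1 <= c2 ->
  (forall c, c1 <= c <= c2 -> exists k, al k < c < be k) ->
  exists K, forall c, c1 <= c <= c2 -> exists k, (k <= K)%N /\ al k < c < be k.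
Proof.
move=> H12 Hc.
set S := fun x => c1 <= x <= c2 /\
  exists K, forall c, c1 <= c <= x -> exists k, (k <= K)%N /\ al k < c < be k.
have S1 : S c1.
  split; first lra.
  have [k0 Hk0] := Hc c1 ltac:(lra).
  by exists k0 => c Hc'; exists k0; split => //; have -> : c = c1 by lra.
have [m [Hm1 Hm2]] := completeness S (ex_intro _ c2 (fun x Sx => proj2 (proj1 Sx)))
  (ex_intro _ c1 S1).
have Hcm : c1 <= m by apply: Hm1.
have Hmc : m <= c2 by apply: Hm2 => x [[_ Hx] _].
have [j Hj] := Hc m ltac:(lra).
have [x [[Hx1 [K HK]] Hxj]] : exists x, S x /\ al j < x.
  apply: NNPP => Hn; have : m <= al j; last lra.
  by apply: Hm2 => x Sx; apply: Rnot_lt_le => Hlt; apply: Hn; exists x.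
set y := Rmin c2 ((m + be j) / 2).
have Sy : S y.
  split; first by split; [rewrite /y; apply: Rmin_glb; lra | apply: Rmin_l].
  exists (maxn K j) => c Hc'.
  case: (Rle_lt_dec c x) => Hcx.
    have [k [Hk Hk']] := HK c ltac:(lra).
    by exists k; split => //; apply: (leq_trans Hk); exact: leq_maxl.
  exists j; split; first exact: leq_maxr.
  have : y <= (m + be j) / 2 by apply: Rmin_r.
  lra.
have Hym := Hm1 y Sy.
case: (Rle_lt_dec c2 ((m + be j) / 2)) => Hc2.
  by move: Sy; rewrite /y Rmin_left // => -[_ [K' HK']]; exists K'.
by move: Hym; rewrite /y Rmin_right; lra.
Qed.

End IntervalCover.

Lemma big_nat_sum_f_R0 n (F : nat -> R) :
  \big[Rplus/0]_(k <- index_iota 0 n.+1) F k = sum_f_R0 F n.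
Proof.
elim: n => [|n IH]; first by rewrite /index_iota /= big_cons big_nil Rplus_0_r.
by rewrite big_nat_recr //= -IH.
Qed.

Lemma sum_geom_half_le n : sum_f_R0 (pow (1/2)) n <= 2 - (1/2)^n.
Proof.
elim: n => [|n IH] /=; first lra.
by have := pow_le (1/2) n ltac:(lra); lra.
Qed.

(* Enlarging the k-th covering interval by [L / 8 * 2^-k] makes the cover open without
   raising the total length above [L / 2]. *)
Lemma negligible_no_interval (A : R -> Prop) c1 c2 : negligible A -> c1 < c2 ->
  ~ (forall c, c1 <= c <= c2 -> A c).
Proof.
move=> HN H12 HA.
set L := c2 - c1.
have [a [b [Hab [Hcov Hsum]]]] := HN (L / 4) ltac:(rewrite /L; lra).
set d := L / 8.
set al := fun k => a k - d * (1/2)^k.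
set be := fun k => b k + d * (1/2)^k.
have Hpos k : 0 < d * (1/2)^k.
  by apply: Rmult_lt_0_compat; [rewrite /d /L; lra | apply: pow_lt; lra].
have Hab' k : al k < be k by have := Hab k; have := Hpos k; rewrite /al /be; lra.
have [K HK] : exists K, forall c, c1 <= c <= c2 -> exists k, (k <= K)%N /\ al k < c < be k.
  apply: finite_subcover; first lra.
  by move=> c Hc; have [k Hk] := Hcov c (HA c Hc); exists k; have := Hpos k; rewrite /al /be; lra.
have : c2 - c1 <= \big[Rplus/0]_(k <- index_iota 0 K.+1) (be k - al k).
  apply: (cover_length_ge _ _ Hab' _ _ (leqnn _)); first lra.
  move=> c Hc; have [k [Hk Hk']] := HK c Hc; exists k; split => //.
  by rewrite mem_index_iota.
rewrite big_nat_sum_f_R0.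
have -> : sum_f_R0 (fun k => be k - al k) K =
          sum_f_R0 (fun k => b k - a k) K + sum_f_R0 (fun k => (1/2)^k * (2 * d)) K.
  by rewrite -sum_plus; apply: PartSum.sum_eq => k _; rewrite /al /be; ring.
rewrite -scal_sum.
have Hgeom : sum_f_R0 (pow (1/2)) K * (2 * d) <= L / 2.
  have := sum_geom_half_le K; have := pow_le (1/2) K ltac:(lra).
  by rewrite /d /L; nra.
by have := Hsum K; rewrite /L in Hgeom *; lra.
Qed.

Lemma IVT_between (h : R -> R) a b c : continuity h -> a <= b ->
  Rmin (h a) (h b) <= c <= Rmax (h a) (h b) -> exists z, a <= z <= b /\ h z = c.
Proof.
move=> Hc Hab Hcc.
case: (Req_dec c (h a)) => [->|Ha]; first by exists a; split => //; lra.
case: (Req_dec c (h b)) => [->|Hb]; first by exists b; split => //; lra.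
case: (Rle_lt_or_eq_dec _ _ Hab) => [Hlt|E]; last first.
  by subst b; rewrite Rmin_left ?Rmax_left in Hcc; lra.
case: (Rle_lt_dec (h a) (h b)) => Hhab.
- rewrite Rmin_left ?Rmax_right in Hcc; try lra.
  have Hc' : continuity (fun t => h t - c).
    by apply: continuity_minus => //; exact: continuity_const.
  have [z [Hz Ez]] := IVT (fun t => h t - c) a b Hc' Hlt ltac:(lra) ltac:(lra).
  by exists z; split => //; lra.
- rewrite Rmin_right ?Rmax_left in Hcc; try lra.
  have Hc' : continuity (fun t => c - h t).
    by apply: continuity_minus => //; exact: continuity_const.
  have [z [Hz Ez]] := IVT (fun t => c - h t) a b Hc' Hlt ltac:(lra) ltac:(lra).
  by exists z; split => //; lra.
Qed.

(* Otherwise, by the intermediate value theorem, [u] would fill an interval inside [B]. *)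
Lemma negligible_values_constant (B : R -> Prop) (u : R -> R) d :
  negligible B -> continuity u -> (forall t, Rabs t < d -> B (u t)) ->
  forall t, Rabs t < d -> u t = u 0.
Proof.
move=> HB Hu Hval t Ht; apply: NNPP => Hne.
set c1 := Rmin (u (Rmin 0 t)) (u (Rmax 0 t)).
set c2 := Rmax (u (Rmin 0 t)) (u (Rmax 0 t)).
have Hc12 : c1 < c2.
  have : u 0 < u t \/ u t < u 0.
    by case: (Rtotal_order (u 0) (u t)) => [|[E|]]; auto; exfalso; apply: Hne.
  by rewrite /c1 /c2; case=> Hlt; unfold Rmin, Rmax; repeat destruct Rle_dec; lra.
apply: (negligible_no_interval _ c1 c2 HB Hc12) => c Hc.
have [z [Hz <-]] := IVT_between u (Rmin 0 t) (Rmax 0 t) c Hu (Rmin_Rmax _ _) Hc.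
apply: Hval; apply: Rle_lt_trans Ht.
case: (Rle_dec 0 t) => H0.
  by rewrite Rmin_left ?Rmax_right // in Hz; rewrite !Rabs_right; lra.
by rewrite Rmin_right ?Rmax_left in Hz; try lra; rewrite !Rabs_left1; lra.
Qed.

Definition wedge {n} (v w : vec n) (i j : 'I_n) := v i * w j - v j * w i.

Lemma wedge0_colinear n (v w : vec n) : vnorm v <> 0 -> (forall i j, wedge v w i j = 0) ->
  w = vscale (dot v w / dot v v) v.
Proof.
move=> Hv HQ; have Hvv : dot v v <> 0 by rewrite dot_vv => E; apply: Hv; nra.
apply: functional_extensionality => i; rewrite /vscale.
apply: (Rmult_eq_reg_r (dot v v)) => //.
have -> : dot v w / dot v v * v i * dot v v = v i * dot v w by field.
rewrite /dot -vsum_scal -vsum_scal; apply: vsum_ext => j.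
have := HQ i j; rewrite /wedge => E.
have : v j * (v i * w j - v j * w i) = 0 by rewrite E; ring.
nra.
Qed.

Section ConverseRadial.
Variables (n : nat) (f : vec n -> R) (Df : vec n -> vec n) (D2f : vec n -> 'I_n -> 'I_n -> R).
Hypothesis HC2 : C2_with f Df D2f.
Variables (G G' : R -> R).
Hypothesis HG : forall s, derivable_pt_lim G s (G' s).
Hypothesis HG' : continuity G'.
Hypothesis HG0 : G 0 = 0.
Variables (phi : vec n -> R) (Dphi : vec n -> vec n) (D2phi : vec n -> 'I_n -> 'I_n -> R).
Hypothesis HC2phi : C2_with phi Dphi D2phi.
Hypothesis Hrel : forall y, Df y <> vzero -> Dphi y = radial G (Df y).
Hypothesis Hae : negligible (fun s => ~ (s * G' s - G s <> 0)).

Local Notation Jr := (radial_grad_jacobian n Df D2f G G').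

Lemma vnorm_neq0_neq_vzero (v : vec n) : vnorm v <> 0 -> v <> vzero.
Proof. by move=> H E; apply: H; rewrite E vnorm_zero. Qed.

Lemma grad_norm_line_continuous (x w : vec n) t0 :
  continuous (fun t : R => vnorm (Df (vadd x (vscale t w)))) t0.
Proof.
apply: (continuous_comp (fun t : R => (Df (vadd x (vscale t w)) : Rn n)) (fun v : Rn n => vnorm v)).
  apply: (continuous_comp (fun t : R => (vadd x (vscale t w) : Rn n)) (Df : Rn n -> Rn n)).
    exact: continuous_line.
  exact: (grad_continuous n f Df D2f HC2).
exact: continuous_vnorm.
Qed.

(* Near a point where [Df] does not vanish, [Dphi] coincides with [radial_grad]. *)
Lemma hess_radial y i j : vnorm (Df y) <> 0 -> D2phi y i j = Jr y i j.
Proof.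
move=> Hv; case: HC2phi => _ [P2 _].
have H1 : is_derive (fun t => radial_grad n Df G (vadd y (vscale t (vbasis j))) i) 0 (Jr y i j).
  by apply/is_derive_Reals; exact: (radial_grad_partial n f Df D2f HC2 G G' HG HG' HG0 y i j).
have Hloc : locally 0 (fun t : R => vnorm (Df (vadd y (vscale t (vbasis j)))) <> 0).
  apply: (locally_neq0 (fun t : R => vnorm (Df (vadd y (vscale t (vbasis j)))))).
    exact: grad_norm_line_continuous.
  by rewrite vadd_scale0.
have H2 : is_derive (fun t => Dphi (vadd y (vscale t (vbasis j))) i) 0 (Jr y i j).
  apply: is_derive_ext_loc H1; apply: filter_imp Hloc => t Ht.
  by rewrite Hrel //; apply: vnorm_neq0_neq_vzero.
exact: uniqueness_limite (P2 y i j) (proj1 (is_derive_Reals _ _ _) H2).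
Qed.

(* The symmetry of [D2phi y] kills the antisymmetric part [c * wedge] of [Jr y]. *)
Lemma wedge_eq0_of_regular y : vnorm (Df y) <> 0 ->
  vnorm (Df y) * G' (vnorm (Df y)) - G (vnorm (Df y)) <> 0 ->
  forall i j, wedge (Df y) (mat_app (D2f y) (Df y)) i j = 0.
Proof.
move=> Hv Hg i j.
have Hs : D2phi y i j = D2phi y j i by exact: C2_hess_sym HC2phi y i j.
rewrite !hess_radial // !(radial_grad_jacobianE n f Df D2f HC2) //
  (C2_hess_sym _ _ _ _ HC2 y j i) in Hs.
set s := vnorm (Df y) in Hv Hg Hs.
have Hc : (G' s - G s / s) / (s * s) <> 0.
  move=> E; apply: Hg.
  have -> : s * G' s - G s = (G' s - G s / s) / (s * s) * (s * s * s) by field.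
  by rewrite E; ring.
by rewrite /wedge; apply: (Rmult_eq_reg_l ((G' s - G s / s) / (s * s))) => //; lra.
Qed.

(* [|Df|^2] has partial derivative [2 (D2f Df)_m]; if it is constant along that line, this vanishes. *)
Lemma hess_grad_coord_eq0 x m d : 0 < d ->
  (forall t, Rabs t < d -> vnorm (Df (vadd x (vscale t (vbasis m)))) = vnorm (Df x)) ->
  mat_app (D2f x) (Df x) m = 0.
Proof.
move=> Hd Hconst; case: HC2 => _ [H2 _].
set l := fun t => vadd x (vscale t (vbasis m)).
have Hl0 : l 0 = x by rewrite /l vadd_scale0.
have Hd1 : derivable_pt_lim (fun t => vsum (fun k => Df (l t) k * Df (l t) k)) 0
   (vsum (fun k => D2f x k m * Df x k + Df x k * D2f x k m)).
  apply: vsum_derivable => k.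
  have Hk : derivable_pt_lim (fun t => Df (l t) k) 0 (D2f x k m) := H2 x k m.
  by have := derivable_pt_lim_mult _ _ _ _ _ Hk Hk; rewrite /mult_fct Hl0.
have Hd2 : derivable_pt_lim (fun t => vsum (fun k => Df (l t) k * Df (l t) k)) 0 0.
  apply/is_derive_Reals.
  apply: (is_derive_ext_loc (fun _ => vnorm (Df x) * vnorm (Df x))); last first.
    by apply/is_derive_Reals; exact: derivable_pt_lim_const.
  exists (mkposreal _ Hd) => t /ball_R; rewrite Rminus_0_r => Ht.
  by rewrite -vnorm_sq (Hconst t Ht).
have E := uniqueness_limite _ _ _ _ Hd1 Hd2.
have : 2 * mat_app (D2f x) (Df x) m = 0.
  rewrite -E /mat_app -vsum_scal; apply: vsum_ext => k.
  by rewrite (C2_hess_sym _ _ _ _ HC2 x k m); ring.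
lra.
Qed.

(* If the wedge were nonzero at [x], it would stay nonzero nearby, so [|Df|] would take only
   exceptional values of [G] along each coordinate line through [x], hence be constant there. *)
Lemma wedge_grad_hess_eq0 x : vnorm (Df x) <> 0 ->
  forall i j, wedge (Df x) (mat_app (D2f x) (Df x)) i j = 0.
Proof.
move=> Hv i0 j0; apply: NNPP => HQ.
suff Hzero m : mat_app (D2f x) (Df x) m = 0 by apply: HQ; rewrite /wedge !Hzero; ring.
set l := fun t => vadd x (vscale t (vbasis m)).
set Q := fun t => wedge (Df (l t)) (mat_app (D2f (l t)) (Df (l t))) i0 j0.
set sf := fun t => vnorm (Df (l t)).
have Hl0 : l 0 = x by rewrite /l vadd_scale0.
have HQc : continuous Q 0.
  case: HC2 => _ [_ [H3 H4]].
  have cD k : continuous (fun t => Df (l t) k) 0.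
    by apply: (continuous_comp (fun t : R => (l t : Rn n)) (fun z : Rn n => Df z k));
      [exact: continuous_line | exact: H3].
  have cH a b : continuous (fun t => D2f (l t) a b) 0.
    by apply: (continuous_comp (fun t : R => (l t : Rn n)) (fun z : Rn n => D2f z a b));
      [exact: continuous_line | exact: H4].
  have cM a : continuous (fun t => mat_app (D2f (l t)) (Df (l t)) a) 0.
    by apply: (continuous_vsum n (fun k t => D2f (l t) a k * Df (l t) k)) => k;
      exact: continuous_Rmult.
  by rewrite /Q /wedge; apply: continuous_Rminus; exact: continuous_Rmult.
have Hloc : locally 0 (fun t => Q t <> 0 /\ sf t <> 0).
  apply: filter_and; apply: locally_neq0.
  - exact: HQc.
  - by rewrite /Q Hl0.
  - exact: grad_norm_line_continuous.
  - by rewrite /sf Hl0.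
have [d [Hd Hdd]] := locally_R0 _ Hloc.
apply: (hess_grad_coord_eq0 x m d Hd) => t Ht.
have -> : vnorm (Df x) = sf 0 by rewrite /sf Hl0.
change (sf t = sf 0).
apply: (negligible_values_constant _ sf d Hae) => // [z | z Hz].
  by apply/continuity_pt_filterlim; exact: grad_norm_line_continuous.
move=> Hne; have [Hq Hs] := Hdd z Hz.
by apply: Hq; rewrite /Q; exact: wedge_eq0_of_regular.
Qed.

Lemma grad_hess_eigen x : exists lam, mat_app (D2f x) (Df x) = vscale lam (Df x).
Proof.
case: (Req_EM_T (vnorm (Df x)) 0) => Hv.
  by rewrite (vnorm_eq0 _ Hv); exists 0; exact: mat_app_zero.
by eexists; apply: wedge0_colinear => //; exact: wedge_grad_hess_eq0.
Qed.

End ConverseRadial.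

Theorem proposition3p2 (n : nat) (f : vec n -> R) :
  convex f -> C2fun f ->
  (* (i) *)
  (classF f ->
     forall G : R -> R, nondecr G -> C1fun G -> G 0 = 0 ->
       exists phi : vec n -> R, classF phi /\
         (forall x v w, is_grad f x v -> is_grad phi x w -> v <> vzero ->
            w = vscale (G (vnorm v) / vnorm v) v) /\
         (forall x v w, is_grad f x v -> is_grad phi x w -> v = vzero ->
            w = vzero))
  /\
  (* (ii) *)
  ((exists (G G' : R -> R) (phi : vec n -> R),
      nondecr G /\ C1_with G G' /\ convex phi /\ C2fun phi /\
      G 0 = 0 /\
      almost_everywhere (fun s => s * G' s - G s <> 0) /\
      (forall x v w, is_grad f x v -> is_grad phi x w -> v <> vzero ->
         w = vscale (G (vnorm v) / vnorm v) v)) ->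
   classF f).
Proof.
move=> Hconv HC2.
have [Df [D2f Hf]] := proj1 (C2funP n f) HC2.
have Hgradf x v : is_grad f x v -> v = Df x.
  by move=> Hv; case: Hf => H1 _; exact: is_grad_unique Hv (H1 x).
split.
- move=> HF G Hmono [G' [HG HG']] HG0.
  have Heig := classF_eigen _ _ _ _ HF Hf.
  exists (radial_potential n Df G).
  split; first exact: (radial_potential_classF n f Df D2f Hf Hconv Heig G G' HG HG' HG0 Hmono).
  have [Hgradp _] := radial_potential_C2 n f Df D2f Hf Heig G G' HG HG' HG0.
  split=> x v w Hv Hw; rewrite (is_grad_unique _ _ _ _ _ Hw (Hgradp x)) (Hgradf x v Hv) //.
  by rewrite /radial_grad => ->; exact: radial_zero.
- case=> G [G' [phi [_ [[HG HG'] [_ [HC2phi [HG0 [Hae Hrel]]]]]]]].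
  have [Dphi [D2phi Hphi]] := proj1 (C2funP n phi) HC2phi.
  have Hrel' y : Df y <> vzero -> Dphi y = radial G (Df y).
    by move=> Hy; apply: (Hrel y); [case: Hf | case: Hphi |].
  split=> //; split=> // x v H Hv HH.
  rewrite (Hgradf x v Hv) (is_hess_unique _ _ _ _ _ _ Hf HH).
  exact: (grad_hess_eigen n f Df D2f Hf G G' HG HG' HG0 phi Dphi D2phi Hphi Hrel' Hae).
Qed.
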